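(* Let $\Omega=e^{\frac{\sqrt{-1}}{2\pi}N\log\frac1z}A(z)$ on the punctured disc, with $N$ nilpotent, $N^{n+1}=0$, and $A(z)=A_0+A_1z+\cdots$ an $H$-valued power series with radius of convergence $\delta>0$. Expanding, write $\Omega=\sum_{k,l}A_{k,l}z^k(\log\frac1z)^l=\sum_{k,l}A_{k,l}f_{k,l}$ with $f_{k,l}=z^k(\log\frac1z)^l$ ($k\ge0$, $0\le l\le n$), and set $\deg f_{k,l}=k-\frac{l}{n+1}$. Then this series converges in the $C^\infty$ sense (near $0$). Moreover, for every real $\mu$ and integer $s\ge0$, \[\Big\|\Omega-\sum_{\deg f_{k,l}\le\mu}A_{k,l}f_{k,l}\Big\|_{C^s}\le C\,r^{k_0-s}\Big(\log\frac1r\Big)^{l_0},\qquad r=|z|,\] for $|z|$ sufficiently small, where $(k_0,l_0)$ is the unique pair of nonnegative integers with $l_0\le n$, $k_0-\frac{l_0}{n+1}>\mu$, and $k'-\frac{l'}{n+1}\ge k_0-\frac{l_0}{n+1}$ for all integers $k',l'$ with $k'-\frac{l'}{n+1}>\mu$; and $C$ is a constant depending only on $k_0,l_0,\mu$ and $\Omega$.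
   Context: This arises from a one-parameter family of polarized Calabi–Yau $n$-folds over the punctured disc $\Delta^*$ (coordinate $z$): by Schmid's nilpotent orbit theorem (after a base change) a nonzero holomorphic section $\Omega$ of the Hodge bundle $F^n$, valued in a fixed complex vector space $H$ (the primitive middle cohomology), has the stated form, $N$ being the nilpotent logarithm of the monodromy. $C^s$ norms are taken with respect to $z$ on a small punctured disc. *)

(* H = C^m, vectors as nat-indexed families
   (only the components i < m are meaningful). *)
From Stdlib Require Import Reals ZArith.
From Coquelicot Require Import Coquelicot.

Local Open Scope R_scope.

Definition Vec := nat -> Complex.C.
Definition Mat := nat -> nat -> Complex.C.

Fixpoint csum (n : nat) (f : nat -> Complex.C) : Complex.C :=
  match n with
  | O => RtoC 0
  | S n' => Cplus (csum n' f) (f n')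
  end.

Definition matmul (m : nat) (M P : Mat) : Mat :=
  fun i j => csum m (fun k => Cmult (M i k) (P k j)).

Definition matvec (m : nat) (M : Mat) (v : Vec) : Vec :=
  fun i => csum m (fun k => Cmult (M i k) (v k)).

Definition idmat : Mat := fun i j => if Nat.eqb i j then RtoC 1 else RtoC 0.

Fixpoint matpow (m : nat) (M : Mat) (l : nat) : Mat :=
  match l with
  | O => idmat
  | S l' => matmul m M (matpow m M l')
  end.

Fixpoint rsum (n : nat) (f : nat -> R) : R :=
  match n with O => 0 | S n' => rsum n' f + f n' end.

Definition vnorm (m : nat) (v : Vec) : R := rsum m (fun i => Cmod (v i)).

(* the slit punctured disc {0 < |z| < rho} minus the negative real axis,
   on which the principal branch of log is used *)
Definition slitdisc (rho : R) (z : Complex.C) : Prop :=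
  0 < Cmod z < rho /\ ~ (Im z = 0 /\ Re z <= 0).

(* principal logarithm: ln|z| + i Arg z, valid on C minus (-oo,0] *)
Definition Clog (z : Complex.C) : Complex.C :=
  (ln (Cmod z), 2 * atan (Im z / (Cmod z + Re z))).

Definition log1z (z : Complex.C) : Complex.C := Clog (Cinv z).

Definition cst : Complex.C := Cdiv Ci (RtoC (2 * PI)).

(* Omega(z) = exp( (sqrt(-1)/(2pi)) N log(1/z) ) A(z); since N^(n+1) = 0 the
   exponential series is the finite sum over l = 0..n *)
Definition Omega (m n : nat) (N : Mat) (Aval : Complex.C -> Vec)
  (z : Complex.C) : Vec :=
  fun i => csum (S n) (fun l =>
    Cmult (Cdiv (Cpow (Cmult cst (log1z z)) l) (RtoC (INR (fact l))))
          (matvec m (matpow m N l) (Aval z) i)).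

Definition fkl (k l : nat) (z : Complex.C) : Complex.C :=
  Cmult (Cpow z k) (Cpow (log1z z) l).

Definition Akl (m : nat) (N : Mat) (A : nat -> Vec) (k l : nat) : Vec :=
  fun i => Cmult (Cdiv (Cpow cst l) (RtoC (INR (fact l))))
                 (matvec m (matpow m N l) (A k) i).

Definition deg (n : nat) (k l : Z) : R := IZR k - IZR l / INR (S n).

Definition psum (m n : nat) (N : Mat) (A : nat -> Vec) (K : nat)
  (z : Complex.C) : Vec :=
  fun i => csum K (fun k => csum (S n) (fun l =>
    Cmult (Akl m N A k l i) (fkl k l z))).

(* truncated sum over all (k,l), k >= 0, 0 <= l <= n, with deg <= mu.
   Every such k satisfies k <= up mu, so summing k = 0 .. Z.to_nat (up mu)
   with the filter deg <= mu gives exactly the finite sum. *)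
Definition trunc (m n : nat) (N : Mat) (A : nat -> Vec) (mu : R)
  (z : Complex.C) : Vec :=
  fun i => csum (S (Z.to_nat (up mu))) (fun k => csum (S n) (fun l =>
    if Rle_dec (deg n (Z.of_nat k) (Z.of_nat l)) mu
    then Cmult (Akl m N A k l i) (fkl k l z) else RtoC 0)).

Definition derivs_on (m : nat) (U : Complex.C -> Prop) (F : nat -> Complex.C -> Vec)
  : Prop :=
  forall (j i : nat) (z : Complex.C), U z -> (i < m)%nat ->
    @is_derive C_AbsRing C_NormedModule (fun w => F j w i) z (F (S j) z i).

Definition Csnorm (m : nat) (F : nat -> Complex.C -> Vec) (s : nat)
  (z : Complex.C) : R :=
  rsum (S s) (fun j => vnorm m (F j z)).

Definition vsub (u v : Vec) : Vec := fun i => Cminus (u i) (v i).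

(** Expanding the exponential, [Omega = sum_(l <= n) c_l N^l (log 1/z)^l A(z)].
   Removing the terms of degree [<= mu] replaces [A] in the [l]-th summand by a
   power series [g_l] vanishing at [0] to order [k0] if [l <= l0] and [k0 + 1]
   if [l > l0], by minimality of [deg (k0, l0)].  On the slit disc the [a]-th
   derivative of [(log 1/z)^l] is [O(|z|^-a (log 1/|z|)^l)] and the [b]-th
   derivative of [g_l] is [O(|z|^(K - b))], so by Leibniz the [j]-th derivative
   of the remainder is [O(|z|^(k0 - j) (log 1/|z|)^l0)]; when [l > l0] the
   extra factor [|z|] absorbs the surplus logarithms.  The [C^oo] convergence
   is the same computation with [g_l] the tails of [A], whose derivatives tend
   to [0] uniformly on compact subsets of the disc of convergence. *)

From Stdlib Require Import Reals ZArith Lra Lia List ClassicalEpsilon.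
From Coquelicot Require Import Coquelicot.
Import ListNotations.

Local Open Scope R_scope.

(** * The logarithm on the slit plane *)

Definition is_Cderive (f : C -> C) (z l : C) : Prop :=
  @is_derive C_AbsRing C_NormedModule f z l.

Lemma is_Cderive_of_absring (f : C -> C) z l :
  @is_derive C_AbsRing (AbsRing_NormedModule C_AbsRing) f z l -> is_Cderive f z l.
Proof. intros [_ H]. split; [apply is_linear_scal_l | exact H]. Qed.

Lemma is_Cderive_to_absring (f : C -> C) z l :
  is_Cderive f z l -> @is_derive C_AbsRing (AbsRing_NormedModule C_AbsRing) f z l.
Proof. intros [_ H]. split; [apply is_linear_scal_l | exact H]. Qed.

Lemma is_Cderive_approx (f : C -> C) (z l : C) :
  (forall eps, 0 < eps -> exists d, 0 < d /\ forall w, Cmod (w - z) < d ->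
     Cmod (f w - f z - (w - z) * l) <= eps * Cmod (w - z)) ->
  is_Cderive f z l.
Proof.
  intros H. split; [apply is_linear_scal_l|].
  intros x Hx. apply (@is_filter_lim_locally_unique C_AbsRing
    (AbsRing_NormedModule C_AbsRing)) in Hx. subst x.
  intros eps. destruct (H eps (cond_pos eps)) as [d [Hd Hw]].
  exists (mkposreal d Hd). exact Hw.
Qed.

Lemma Cmod_pair_le (a b : R) : Cmod (a, b) <= Rabs a + Rabs b.
Proof.
  replace (a, b) with (Cplus (RtoC a) (Cmult (RtoC b) Ci))
    by (unfold Cplus, Cmult, RtoC, Ci; simpl; f_equal; ring).
  eapply Rle_trans; [apply Cmod_triangle|].
  rewrite Cmod_mult, !Cmod_R, Cmod_Ci. lra.
Qed.

Lemma Cmod_ge_sub (w z : C) : Cmod z - Cmod (w - z) <= Cmod w.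
Proof.
  replace z with (w + - (w - z))%C at 1 by ring.
  pose proof (Cmod_triangle w (- (w - z))%C). rewrite Cmod_opp in H. lra.
Qed.

Lemma is_Cderive_Cinv (z : C) : z <> 0%C -> is_Cderive Cinv z (- (/ z * / z))%C.
Proof.
  intros Hz. apply is_Cderive_approx. intros eps Heps.
  pose proof (proj1 (Cmod_gt_0 z) Hz) as Hm. set (r := Cmod z) in *.
  assert (Hr3 : 0 < r * r * r) by (repeat apply Rmult_lt_0_compat; lra).
  exists (Rmin (r / 2) (eps * (r * r * r) / 2)). split.
  { apply Rmin_glb_lt; [lra|]. apply Rmult_lt_0_compat; [nra|lra]. }
  intros w Hw.
  assert (Hw1 : Cmod (w - z) < r / 2) by (eapply Rlt_le_trans; [exact Hw|apply Rmin_l]).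
  assert (Hw2 : Cmod (w - z) < eps * (r * r * r) / 2)
    by (eapply Rlt_le_trans; [exact Hw|apply Rmin_r]).
  pose proof (Cmod_ge_sub w z) as Hge. fold r in Hge.
  assert (Hwm : r / 2 <= Cmod w) by lra.
  assert (Hw0 : w <> 0%C) by (intros E; rewrite E, Cmod_0 in Hwm; lra).
  replace (/ w - / z - (w - z) * - (/ z * / z))%C with ((w - z) * (w - z) * / (w * z * z))%C
    by (field; split; auto).
  rewrite !Cmod_mult, Cmod_inv, !Cmod_mult by (repeat apply Cmult_neq_0; auto).
  fold r. set (h := Cmod (w - z)) in *.
  assert (0 <= h) by apply Cmod_ge_0.
  assert (Hpos : 0 < Cmod w * r * r) by (repeat apply Rmult_lt_0_compat; lra).
  apply Rmult_le_reg_r with (Cmod w * r * r); [exact Hpos|].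
  rewrite Rmult_assoc, Rinv_l, Rmult_1_r by lra.
  assert (h * h <= h * (eps * (r * r * r) / 2)) by (apply Rmult_le_compat_l; lra).
  assert (eps * h * (r / 2 * r * r) <= eps * h * (Cmod w * r * r)).
  { apply Rmult_le_compat_l; [apply Rmult_le_pos; lra|].
    apply Rmult_le_compat_r; [lra|]. apply Rmult_le_compat_r; lra. }
  nra.
Qed.

Notation R2 := (prod_NormedModule R_AbsRing R_NormedModule R_NormedModule).

Lemma sqnorm_pos (z : R * R) : z <> (0, 0) -> 0 < fst z * fst z + snd z * snd z.
Proof.
  destruct z as [x y]; simpl; intros H.
  destruct (Req_dec x 0); destruct (Req_dec y 0); subst; try (exfalso; now apply H).
  all: nra.
Qed.

Lemma Cmod_sqrt_sqnorm (p : R * R) : Cmod p = sqrt (fst p * fst p + snd p * snd p).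
Proof. unfold Cmod. f_equal. ring. Qed.

Lemma Cmod_sqr (p : R * R) : Cmod p * Cmod p = fst p * fst p + snd p * snd p.
Proof.
  rewrite Cmod_sqrt_sqnorm. apply sqrt_sqrt. destruct p; simpl; nra.
Qed.

Lemma filterdiff_fst (z : R * R) :
  @filterdiff R_AbsRing R2 R_NormedModule fst (locally z) fst.
Proof. apply filterdiff_linear, is_linear_fst. Qed.

Lemma filterdiff_snd (z : R * R) :
  @filterdiff R_AbsRing R2 R_NormedModule snd (locally z) snd.
Proof. apply filterdiff_linear, is_linear_snd. Qed.

Lemma filterdiff_sqnorm (z : R * R) :
  @filterdiff R_AbsRing R2 R_NormedModule
    (fun p : R * R => fst p * fst p + snd p * snd p) (locally z)
    (fun h => 2 * (fst h * fst z + snd h * snd z)).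
Proof.
  pose proof (filterdiff_mult_fct _ _ z _ _ Rmult_comm (filterdiff_fst z) (filterdiff_fst z)).
  pose proof (filterdiff_mult_fct _ _ z _ _ Rmult_comm (filterdiff_snd z) (filterdiff_snd z)).
  eapply filterdiff_ext_lin; [exact (filterdiff_plus_fct _ _ _ _ H H0)|].
  intros h. simpl. unfold plus, mult; simpl. ring.
Qed.

Lemma filterdiff_Cmod (z : R * R) : z <> (0, 0) ->
  @filterdiff R_AbsRing R2 R_NormedModule Cmod (locally z)
    (fun h => (fst h * fst z + snd h * snd z) / Cmod z).
Proof.
  intros Hz. pose proof (sqnorm_pos z Hz) as HQ.
  pose proof (filterdiff_comp' _ _ z _ _ (filterdiff_sqnorm z) (filterdiff_sqrt _ HQ)) as H.
  eapply filterdiff_ext_lin.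
  - eapply filterdiff_ext; [|exact H]. intros p. symmetry; apply Cmod_sqrt_sqnorm.
  - intros h. simpl. rewrite Cmod_sqrt_sqnorm. unfold scal; simpl; unfold mult; simpl.
    assert (0 < sqrt (fst z * fst z + snd z * snd z)) by (apply sqrt_lt_R0; lra).
    field. lra.
Qed.

Lemma filterdiff_ln_Cmod (z : R * R) : z <> (0, 0) ->
  @filterdiff R_AbsRing R2 R_NormedModule (fun p => ln (Cmod p)) (locally z)
    (fun h => (fst h * fst z + snd h * snd z) / (fst z * fst z + snd z * snd z)).
Proof.
  intros Hz. pose proof (proj1 (Cmod_gt_0 z) Hz) as Hc.
  eapply filterdiff_ext_lin.
  - exact (filterdiff_comp' _ _ z _ _ (filterdiff_Cmod z Hz) (is_derive_ln _ Hc)).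
  - intros h. simpl. unfold scal; simpl; unfold mult; simpl.
    rewrite <- Cmod_sqr. field. lra.
Qed.

(* The imaginary part of [Clog], [2 atan (y / (|z| + x))], is the half-angle
   formula for the argument; its gradient is that of [atan2 y x]. *)
Lemma filterdiff_Carg (z : R * R) : z <> (0, 0) -> 0 < Cmod z + fst z ->
  @filterdiff R_AbsRing R2 R_NormedModule
    (fun p : R * R => 2 * atan (snd p / (Cmod p + fst p))) (locally z)
    (fun h => (fst z * snd h - snd z * fst h) / (fst z * fst z + snd z * snd z)).
Proof.
  intros Hz HD. pose proof (proj1 (Cmod_gt_0 z) Hz) as Hc.
  pose proof (filterdiff_plus_fct _ _ _ _ (filterdiff_Cmod z Hz) (filterdiff_fst z)) as HDf.
  assert (Hinv : is_derive (fun y : R => / y) (Cmod z + fst z) (- 1 / (Cmod z + fst z) ^ 2)).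
  { apply (is_derive_inv (fun y => y)); [apply (is_derive_id (K := R_AbsRing))|lra]. }
  pose proof (filterdiff_comp' _ _ z _ _ HDf Hinv) as HI.
  pose proof (filterdiff_mult_fct _ _ z _ _ Rmult_comm (filterdiff_snd z) HI) as HT.
  assert (Hat : is_derive (fun x : R => 2 * atan x) (snd z * / (Cmod z + fst z))
                  (2 * / (1 + (snd z * / (Cmod z + fst z))²)))
    by (apply is_derive_scal, is_derive_atan).
  eapply filterdiff_ext_lin; [exact (filterdiff_comp' _ _ z _ _ HT Hat)|].
  intros h. simpl. unfold scal, plus, mult; simpl; unfold mult; simpl.
  pose proof (Cmod_sqr z) as HC2. pose proof (sqnorm_pos z Hz) as HQ.
  destruct z as [x y]; simpl in *. set (s := Cmod (x, y)) in *. unfold Rsqr.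
  replace (1 + y * / (s + x) * (y * / (s + x))) with (2 * s / (s + x))
    by (field_simplify_eq; [nra|lra]).
  rewrite <- HC2. destruct h as [h1 h2]; simpl.
  field_simplify; try (split; lra); try lra.
  replace (y ^ 2) with (s ^ 2 - x ^ 2) by (simpl; nra).
  field. split; [lra|].
  replace (s ^ 3 + s ^ 2 * x) with (s * s * (s + x)) by ring.
  apply Rgt_not_eq. repeat apply Rmult_lt_0_compat; lra.
Qed.

Lemma filterdiff_approx (g l : R * R -> R) (z : R * R) :
  @filterdiff R_AbsRing R2 R_NormedModule g (locally z) l ->
  forall eps, 0 < eps -> exists d, 0 < d /\ forall w : R * R,
    Cmod (w - z) < d -> Rabs (g w - g z - l (w - z)%C) <= eps * Cmod (w - z).
Proof.
  intros [_ H] eps Heps.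
  destruct (H z (fun P HP => HP) (mkposreal eps Heps)) as [[d Hd] Hb].
  exists d. split; [exact Hd|]. intros w Hw.
  pose proof (Rmax_Cmod (w - z)%C) as Hmax. simpl in Hmax.
  assert (Hball : ball z d w).
  { split; simpl; unfold AbsRing_ball, abs, minus, plus, opp; simpl;
      eapply Rle_lt_trans; try exact Hw; eapply Rle_trans; try exact Hmax;
      [apply Rmax_l | apply Rmax_r]. }
  specialize (Hb w Hball). simpl in Hb.
  unfold norm, minus, plus, opp in Hb; simpl in Hb.
  unfold prod_norm, abs, plus, opp in Hb; simpl in Hb.
  unfold Cmod, Cminus, Cplus, Copp; simpl.
  assert (Hsq : forall a : R, norm a * (norm a * 1) = a * (a * 1)).
  { intros a. change (norm a) with (Rabs a). rewrite !Rmult_1_r, <- Rabs_mult.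
    apply Rabs_pos_eq. nra. }
  rewrite !Hsq in Hb. exact Hb.
Qed.

Lemma is_Cderive_Clog (z : C) : z <> 0%C -> 0 < Cmod z + Re z ->
  is_Cderive Clog z (/ z)%C.
Proof.
  intros Hz HD. apply is_Cderive_approx. intros eps Heps.
  destruct (filterdiff_approx _ _ z (filterdiff_ln_Cmod z Hz) (eps / 2)) as [d1 [Hd1 H1]]; [lra|].
  destruct (filterdiff_approx _ _ z (filterdiff_Carg z Hz HD) (eps / 2)) as [d2 [Hd2 H2]]; [lra|].
  exists (Rmin d1 d2). split; [apply Rmin_glb_lt; auto|].
  intros w Hw.
  specialize (H1 w ltac:(eapply Rlt_le_trans; [exact Hw|apply Rmin_l])).
  specialize (H2 w ltac:(eapply Rlt_le_trans; [exact Hw|apply Rmin_r])).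
  pose proof (sqnorm_pos z Hz) as HQ.
  destruct z as [x y], w as [a b]; simpl in *.
  unfold Clog, Cminus, Cplus, Copp, Cmult, Cinv, Re, Im in *; simpl in *.
  eapply Rle_trans; [apply Cmod_pair_le|].
  match goal with |- Rabs ?P + Rabs ?Q <= _ =>
    replace P with (ln (Cmod (a, b)) - ln (Cmod (x, y)) -
       ((a + - x) * x + (b + - y) * y) / (x * x + y * y)) by (field; lra);
    replace Q with (2 * atan (b / (Cmod (a, b) + a)) - 2 * atan (y / (Cmod (x, y) + x)) -
       (x * (b + - y) - y * (a + - x)) / (x * x + y * y)) by (field; lra) end.
  lra.
Qed.

Definition slit_plane (z : C) : Prop := ~ (Im z = 0 /\ Re z <= 0).

Lemma slit_plane_neq0 z : slit_plane z -> z <> 0%C.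
Proof. intros H E. apply H. subst. simpl. split; lra. Qed.

Lemma slit_plane_Cmod_Re z : slit_plane z -> 0 < Cmod z + Re z.
Proof.
  intros H. destruct z as [x y]; simpl in *. unfold Cmod; simpl.
  destruct (Req_dec y 0) as [Hy|Hy].
  - subst. assert (x > 0) by (destruct (Rle_dec x 0); [exfalso; apply H; auto|lra]).
    pose proof (sqrt_pos (x * (x * 1) + 0 * (0 * 1))). lra.
  - assert (Rabs x < sqrt (x * (x * 1) + y * (y * 1))).
    { rewrite !Rmult_1_r, <- sqrt_Rsqr_abs. apply sqrt_lt_1_alt.
      pose proof (Rsqr_pos_lt y Hy). unfold Rsqr in *. nra. }
    pose proof (Rabs_maj2 x). lra.
Qed.

Lemma slit_plane_Cinv z : slit_plane z -> slit_plane (/ z).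
Proof.
  intros H. pose proof (sqnorm_pos z (slit_plane_neq0 z H)) as HQ.
  destruct z as [x y]. unfold slit_plane, Cinv in *; simpl in *. intros [H1 H2]. apply H.
  replace (x * (x * 1) + y * (y * 1)) with (x * x + y * y) in * by ring.
  assert (Hi : 0 < / (x * x + y * y)) by (apply Rinv_0_lt_compat; lra).
  unfold Rdiv in H1, H2.
  assert (y = 0) by (apply Rmult_eq_reg_r with (/ (x * x + y * y)); lra).
  split; [auto | nra].
Qed.

Lemma is_Cderive_log1z (z : C) : slit_plane z -> is_Cderive log1z z (- / z)%C.
Proof.
  intros H. pose proof (slit_plane_neq0 z H) as Hz.
  pose proof (slit_plane_Cinv z H) as Hi.
  pose proof (is_derive_comp Clog Cinv z _ _
    (is_Cderive_Clog (/ z) (slit_plane_neq0 _ Hi) (slit_plane_Cmod_Re _ Hi))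
    (is_Cderive_to_absring _ _ _ (is_Cderive_Cinv z Hz))) as H3.
  replace (- / z)%C with (scal (- (/ z * / z))%C (/ / z)%C); [exact H3|].
  unfold scal; simpl; unfold mult; simpl. field. exact Hz.
Qed.

Lemma csum_ext n f g : (forall k, (k < n)%nat -> f k = g k) -> csum n f = csum n g.
Proof.
  induction n; simpl; intros H; auto.
  rewrite IHn, H by (try intros; try apply H; lia). auto.
Qed.

Lemma csum_plus n f g : csum n (fun k => f k + g k)%C = (csum n f + csum n g)%C.
Proof. induction n; simpl; [ring|]. rewrite IHn. ring. Qed.

Lemma csum_minus n f g : csum n (fun k => f k - g k)%C = (csum n f - csum n g)%C.
Proof. induction n; simpl; [ring|]. rewrite IHn. ring. Qed.

Lemma csum_mull n c f : csum n (fun k => c * f k)%C = (c * csum n f)%C.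
Proof. induction n; simpl; [ring|]. rewrite IHn. ring. Qed.

Lemma csum_mulr n c f : csum n (fun k => f k * c)%C = (csum n f * c)%C.
Proof. induction n; simpl; [ring|]. rewrite IHn. ring. Qed.

Lemma csum_const0 n : csum n (fun _ => 0%C) = 0%C.
Proof. induction n; simpl; auto. rewrite IHn. ring. Qed.

Lemma csum_swap n m (f : nat -> nat -> C) :
  csum n (fun i => csum m (f i)) = csum m (fun j => csum n (fun i => f i j)).
Proof. induction n; simpl; [now rewrite csum_const0|]. rewrite IHn, <- csum_plus. auto. Qed.

Lemma Cmod_csum_le n f : Cmod (csum n f) <= rsum n (fun k => Cmod (f k)).
Proof.
  induction n; simpl; [rewrite Cmod_0; lra|].
  eapply Rle_trans; [apply Cmod_triangle|lra].
Qed.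

Lemma rsum_ext n f g : (forall k, (k < n)%nat -> f k = g k) -> rsum n f = rsum n g.
Proof.
  induction n; simpl; intros H; auto.
  rewrite IHn, H by (try intros; try apply H; lia). auto.
Qed.

Lemma rsum_le n f g : (forall k, (k < n)%nat -> f k <= g k) -> rsum n f <= rsum n g.
Proof.
  induction n; simpl; intros H; [lra|].
  apply Rplus_le_compat; [apply IHn; intros|]; apply H; lia.
Qed.


Lemma rsum_mulr n f c : rsum n (fun k => f k * c) = rsum n f * c.
Proof. induction n; simpl; [ring|]. rewrite IHn. ring. Qed.

Lemma rsum_ge0 n f : (forall k, (k < n)%nat -> 0 <= f k) -> 0 <= rsum n f.
Proof.
  induction n; simpl; intros H; [lra|].
  pose proof (H n ltac:(lia)). pose proof (IHn ltac:(intros; apply H; lia)). lra.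
Qed.

(** * Towers of complex derivatives *)

Lemma is_Cderive_eq f z l l' : l = l' -> is_Cderive f z l -> is_Cderive f z l'.
Proof. intros ->; auto. Qed.

Lemma is_Cderive_ext f g z l : (forall w, f w = g w) -> is_Cderive f z l -> is_Cderive g z l.
Proof. intros H. apply is_derive_ext. auto. Qed.

Lemma is_Cderive_const c z : is_Cderive (fun _ => c) z 0%C.
Proof. apply (is_derive_const (K := C_AbsRing) (V := C_NormedModule)). Qed.

Lemma is_Cderive_plus f g z a b :
  is_Cderive f z a -> is_Cderive g z b -> is_Cderive (fun w => f w + g w)%C z (a + b)%C.
Proof. apply (is_derive_plus (K := C_AbsRing) (V := C_NormedModule)). Qed.

Lemma is_Cderive_minus f g z a b :
  is_Cderive f z a -> is_Cderive g z b -> is_Cderive (fun w => f w - g w)%C z (a - b)%C.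
Proof. apply (is_derive_minus (K := C_AbsRing) (V := C_NormedModule)). Qed.

Lemma is_Cderive_mult f g z a b : is_Cderive f z a -> is_Cderive g z b ->
  is_Cderive (fun w => f w * g w)%C z (a * g z + f z * b)%C.
Proof.
  intros H1 H2. apply is_Cderive_of_absring.
  apply (is_derive_mult (K := C_AbsRing) f g z a b
    (is_Cderive_to_absring _ _ _ H1) (is_Cderive_to_absring _ _ _ H2)).
  intros; apply Cmult_comm.
Qed.

Lemma is_Cderive_scal c f z a : is_Cderive f z a -> is_Cderive (fun w => c * f w)%C z (c * a)%C.
Proof.
  intros H. eapply is_Cderive_eq; [|apply is_Cderive_mult; [apply is_Cderive_const|exact H]].
  simpl. ring.
Qed.

Lemma is_Cderive_csum n (F : nat -> C -> C) (dF : nat -> C) z :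
  (forall k, (k < n)%nat -> is_Cderive (F k) z (dF k)) ->
  is_Cderive (fun w => csum n (fun k => F k w)) z (csum n dF).
Proof.
  induction n; simpl; intros H; [apply is_Cderive_const|].
  apply is_Cderive_plus; [apply IHn; intros|]; apply H; lia.
Qed.

Lemma is_Cderive_Cinv_pow n (z : C) : z <> 0%C ->
  is_Cderive (fun w => Cpow (/ w) (S n)) z (RtoC (- INR (S n)) * Cpow (/ z) (S (S n)))%C.
Proof.
  intros Hz. induction n.
  - apply (is_Cderive_ext Cinv); [intros w; simpl; ring|].
    eapply is_Cderive_eq; [|apply is_Cderive_Cinv, Hz]. simpl. rewrite RtoC_opp. ring.
  - apply (is_Cderive_ext (fun w => / w * Cpow (/ w) (S n))%C); [reflexivity|].
    eapply is_Cderive_eq; [|apply is_Cderive_mult; [apply is_Cderive_Cinv, Hz|apply IHn]].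
    rewrite !Cpow_S, !S_INR, !RtoC_opp, !RtoC_plus. ring.
Qed.

Definition Cderivs_on (U : C -> Prop) (f : nat -> C -> C) : Prop :=
  forall j z, U z -> is_Cderive (f j) z (f (S j) z).


Lemma Cderivs_on_minus U f g :
  Cderivs_on U f -> Cderivs_on U g -> Cderivs_on U (fun j z => f j z - g j z)%C.
Proof. intros Hf Hg j z Hz. apply is_Cderive_minus; auto. Qed.

Lemma Cderivs_on_scal U c f : Cderivs_on U f -> Cderivs_on U (fun j z => c * f j z)%C.
Proof. intros Hf j z Hz. apply is_Cderive_scal; auto. Qed.

Lemma Cderivs_on_csum U n (F : nat -> nat -> C -> C) :
  (forall k, (k < n)%nat -> Cderivs_on U (F k)) ->
  Cderivs_on U (fun j z => csum n (fun k => F k j z)).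
Proof. intros H j z Hz. apply is_Cderive_csum. intros k Hk. apply H; auto. Qed.

(* The j-th derivative of a product, expanded into 2^j terms [f^(a) g^(b)] with
   [a + b = j] rather than into binomial coefficients. *)
Fixpoint leibniz_pairs (j : nat) : list (nat * nat) :=
  match j with
  | O => [(O, O)]
  | S j' => flat_map (fun p => [(S (fst p), snd p); (fst p, S (snd p))]) (leibniz_pairs j')
  end.

Definition Clist_sum (l : list C) : C := fold_right Cplus 0%C l.

Definition Cderivs_mul (f g : nat -> C -> C) (j : nat) (z : C) : C :=
  Clist_sum (map (fun p => f (fst p) z * g (snd p) z)%C (leibniz_pairs j)).

Lemma leibniz_pairs_sum j p : In p (leibniz_pairs j) -> (fst p + snd p = j)%nat.
Proof.
  revert p; induction j; simpl; intros p H.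
  - destruct H as [<-|[]]; auto.
  - apply in_flat_map in H. destruct H as [q [Hq Hp]].
    specialize (IHj q Hq). simpl in Hp. destruct Hp as [<-|[<-|[]]]; simpl; lia.
Qed.

Lemma Cmod_Clist_sum_le {A} (h : A -> C) (ps : list A) M :
  (forall p, In p ps -> Cmod (h p) <= M) -> Cmod (Clist_sum (map h ps)) <= INR (length ps) * M.
Proof.
  induction ps as [|p ps IH]; simpl; intros H; [rewrite Cmod_0; lra|].
  eapply Rle_trans; [apply Cmod_triangle|].
  pose proof (H p (or_introl eq_refl)). pose proof (IH (fun q Hq => H q (or_intror Hq))).
  destruct (length ps); simpl in *; lra.
Qed.

Lemma Cderivs_on_mul U f g : Cderivs_on U f -> Cderivs_on U g -> Cderivs_on U (Cderivs_mul f g).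
Proof.
  intros Hf Hg j z Hz. unfold Cderivs_mul. simpl leibniz_pairs at 2.
  induction (leibniz_pairs j) as [|p ps IH]; simpl; [apply is_Cderive_const|].
  eapply is_Cderive_eq;
    [|apply is_Cderive_plus; [apply is_Cderive_mult; [apply Hf|apply Hg]; auto|exact IH]].
  simpl. ring.
Qed.

Lemma Cderivs_mul_0 f g z : Cderivs_mul f g 0 z = (f O z * g O z)%C.
Proof. unfold Cderivs_mul; simpl. ring. Qed.

Fixpoint log1z_dcoef (j : nat) : C :=
  match j with O => RtoC (-1) | S j' => (log1z_dcoef j' * RtoC (- INR (S j')))%C end.

Definition log1z_derivs (j : nat) (z : C) : C :=
  match j with O => log1z z | S j' => (log1z_dcoef j' * Cpow (/ z) (S j'))%C end.

Lemma Cderivs_on_log1z U : (forall z, U z -> slit_plane z) -> Cderivs_on U log1z_derivs.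
Proof.
  intros HU [|j] z Hz.
  - eapply is_Cderive_eq; [|apply is_Cderive_log1z; auto]. simpl. ring.
  - eapply is_Cderive_eq;
      [|apply is_Cderive_scal, is_Cderive_Cinv_pow, slit_plane_neq0; auto].
    change (log1z_dcoef j * (RtoC (- INR (S j)) * Cpow (/ z) (S (S j)))
      = log1z_dcoef j * RtoC (- INR (S j)) * Cpow (/ z) (S (S j)))%C.
    ring.
Qed.

Definition const1_derivs (j : nat) (z : C) : C := match j with O => 1%C | S _ => 0%C end.

Lemma Cderivs_on_const1 U : Cderivs_on U const1_derivs.
Proof. intros [|j] z _; apply is_Cderive_const. Qed.

Fixpoint log1z_pow_derivs (l : nat) : nat -> C -> C :=
  match l with
  | O => const1_derivs
  | S l' => Cderivs_mul log1z_derivs (log1z_pow_derivs l')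
  end.

Lemma Cderivs_on_log1z_pow U l :
  (forall z, U z -> slit_plane z) -> Cderivs_on U (log1z_pow_derivs l).
Proof.
  intros HU. induction l; simpl; [apply Cderivs_on_const1|].
  apply Cderivs_on_mul; auto. apply Cderivs_on_log1z; auto.
Qed.

Lemma log1z_pow_derivs_0 l z : log1z_pow_derivs l 0 z = Cpow (log1z z) l.
Proof. induction l; simpl; auto. rewrite Cderivs_mul_0, IHl. auto. Qed.

(** * Growth bounds near the puncture *)

(* [|log (1/z)| <= logbound z] since the argument lies in [[-PI, PI]]. *)
Definition logbound (z : C) : R := ln (1 / Cmod z) + PI.

Definition weight (k : Z) (l j : nat) (z : C) : R :=
  powerRZ (Cmod z) (k - Z.of_nat j) * logbound z ^ l.

Definition in_punctured_unit_disc (U : C -> Prop) : Prop := forall z, U z -> 0 < Cmod z < 1.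

Definition derivs_O (U : C -> Prop) (f : nat -> C -> C) (k : Z) (l : nat) : Prop :=
  forall j, exists c, 0 <= c /\ forall z, U z -> Cmod (f j z) <= c * weight k l j z.

Lemma ln_inv_Cmod_gt0 z : 0 < Cmod z < 1 -> 0 < ln (1 / Cmod z).
Proof.
  intros H. rewrite <- ln_1. apply ln_increasing; [lra|].
  unfold Rdiv. rewrite Rmult_1_l, <- Rinv_1. apply Rinv_lt_contravar; lra.
Qed.

Lemma logbound_ge1 z : 0 < Cmod z < 1 -> 1 <= logbound z.
Proof. intros H. unfold logbound. pose proof (ln_inv_Cmod_gt0 z H). pose proof PI2_1. lra. Qed.

Lemma weight_ge0 k l j z : 0 < Cmod z < 1 -> 0 <= weight k l j z.
Proof.
  intros H. unfold weight. apply Rmult_le_pos; [apply powerRZ_le; lra|].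
  apply pow_le. pose proof (logbound_ge1 z H). lra.
Qed.

Lemma weight_mul k l k' l' a b z : 0 < Cmod z ->
  weight k l a z * weight k' l' b z = weight (k + k') (l + l') (a + b) z.
Proof.
  intros H. unfold weight. rewrite pow_add.
  replace (k + k' - Z.of_nat (a + b))%Z with ((k - Z.of_nat a) + (k' - Z.of_nat b))%Z by lia.
  rewrite powerRZ_add by lra. ring.
Qed.

Lemma derivs_O_upto U f k l : in_punctured_unit_disc U -> derivs_O U f k l -> forall J,
  exists c, 0 <= c /\ forall a z, (a <= J)%nat -> U z -> Cmod (f a z) <= c * weight k l a z.
Proof.
  intros HU HB J. induction J.
  - destruct (HB 0%nat) as [c [Hc H]]. exists c. split; auto. intros a z Ha Hz.
    replace a with 0%nat by lia. auto.
  - destruct IHJ as [c1 [Hc1 H1]], (HB (S J)) as [c2 [Hc2 H2]].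
    exists (c1 + c2). split; [lra|]. intros a z Ha Hz.
    pose proof (weight_ge0 k l a z (HU z Hz)).
    destruct (Nat.eq_dec a (S J)) as [->|Hne].
    + specialize (H2 z Hz). nra.
    + specialize (H1 a z ltac:(lia) Hz). nra.
Qed.

Lemma derivs_O_mul U f g k l k' l' : in_punctured_unit_disc U ->
  derivs_O U f k l -> derivs_O U g k' l' -> derivs_O U (Cderivs_mul f g) (k + k') (l + l').
Proof.
  intros HU Hf Hg j.
  destruct (derivs_O_upto U f k l HU Hf j) as [cf [Hcf Hf']].
  destruct (derivs_O_upto U g k' l' HU Hg j) as [cg [Hcg Hg']].
  exists (INR (length (leibniz_pairs j)) * (cf * cg)). split.
  { apply Rmult_le_pos; [apply pos_INR|nra]. }
  intros z Hz. unfold Cderivs_mul. rewrite Rmult_assoc.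
  apply Cmod_Clist_sum_le. intros p Hp. pose proof (leibniz_pairs_sum j p Hp) as Hs.
  rewrite Cmod_mult, <- Hs, <- weight_mul by (apply HU; auto).
  replace (cf * cg * (weight k l (fst p) z * weight k' l' (snd p) z)) with
    ((cf * weight k l (fst p) z) * (cg * weight k' l' (snd p) z)) by ring.
  apply Rmult_le_compat; try apply Cmod_ge_0.
  - apply Hf'; auto; lia.
  - apply Hg'; auto; lia.
Qed.

Lemma derivs_O_plus U f g k l : in_punctured_unit_disc U ->
  derivs_O U f k l -> derivs_O U g k l -> derivs_O U (fun j z => f j z + g j z)%C k l.
Proof.
  intros HU Hf Hg j. destruct (Hf j) as [c1 [H1 H1']], (Hg j) as [c2 [H2 H2']].
  exists (c1 + c2). split; [lra|]. intros z Hz.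
  eapply Rle_trans; [apply Cmod_triangle|]. specialize (H1' z Hz). specialize (H2' z Hz). lra.
Qed.

Lemma derivs_O_scal U c f k l : derivs_O U f k l -> derivs_O U (fun j z => c * f j z)%C k l.
Proof.
  intros Hf j. destruct (Hf j) as [c1 [H1 H1']]. exists (Cmod c * c1). split.
  - apply Rmult_le_pos; auto. apply Cmod_ge_0.
  - intros z Hz. rewrite Cmod_mult, Rmult_assoc. apply Rmult_le_compat_l; auto. apply Cmod_ge_0.
Qed.

Lemma derivs_O_csum U n (F : nat -> nat -> C -> C) k l : in_punctured_unit_disc U ->
  (forall i, (i < n)%nat -> derivs_O U (F i) k l) ->
  derivs_O U (fun j z => csum n (fun i => F i j z)) k l.
Proof.
  intros HU H. induction n; simpl.
  - intros j. exists 0. split; [lra|]. intros z _. rewrite Cmod_0. lra.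
  - apply derivs_O_plus; [exact HU | apply IHn; intros | ]; apply H; lia.
Qed.

Lemma derivs_O_const1 U : in_punctured_unit_disc U -> derivs_O U const1_derivs 0 0.
Proof.
  intros HU j. exists 1. split; [lra|]. intros z Hz.
  pose proof (weight_ge0 0 0 j z (HU z Hz)).
  destruct j; simpl; [rewrite Cmod_1; unfold weight; simpl; lra | rewrite Cmod_0; lra].
Qed.

Lemma Cmod_log1z_le z : 0 < Cmod z < 1 -> Cmod (log1z z) <= logbound z.
Proof.
  intros H. unfold log1z, Clog, logbound.
  eapply Rle_trans; [apply Cmod_pair_le|].
  assert (Hz : z <> 0%C) by (intros E; rewrite E, Cmod_0 in H; lra).
  rewrite Cmod_inv by auto.
  replace (/ Cmod z) with (1 / Cmod z) by (unfold Rdiv; ring).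
  rewrite Rabs_pos_eq by (pose proof (ln_inv_Cmod_gt0 z H); lra).
  pose proof (atan_bound (Im (/ z) / (1 / Cmod z + Re (/ z)))).
  assert (Rabs (2 * atan (Im (/ z) / (1 / Cmod z + Re (/ z)))) <= PI) by (apply Rabs_le; lra).
  lra.
Qed.

Lemma derivs_O_log1z U : in_punctured_unit_disc U -> derivs_O U log1z_derivs 0 1.
Proof.
  intros HU [|j].
  - exists 1. split; [lra|]. intros z Hz. unfold weight; simpl.
    pose proof (Cmod_log1z_le z (HU z Hz)). lra.
  - exists (Cmod (log1z_dcoef j)). split; [apply Cmod_ge_0|]. intros z Hz. simpl.
    pose proof (HU z Hz) as Hr.
    assert (Hz0 : z <> 0%C) by (intros E; rewrite E, Cmod_0 in Hr; lra).
    rewrite Cmod_mult. apply Rmult_le_compat_l; [apply Cmod_ge_0|].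
    unfold weight. rewrite <- (Cpow_S (/ z) j), Cmod_pow, Cmod_inv by auto.
    replace (0 - Z.of_nat (S j))%Z with (- Z.of_nat (S j))%Z by lia.
    rewrite powerRZ_neg', <- pow_powerRZ, pow_inv, pow_1.
    pose proof (logbound_ge1 z Hr).
    assert (0 < / Cmod z ^ S j) by (apply Rinv_0_lt_compat, pow_lt; lra).
    nra.
Qed.

Lemma derivs_O_log1z_pow U l : in_punctured_unit_disc U -> derivs_O U (log1z_pow_derivs l) 0 l.
Proof.
  intros HU. induction l; simpl; [apply derivs_O_const1; auto|].
  exact (derivs_O_mul U _ _ 0 1 0 l HU (derivs_O_log1z U HU) IHl).
Qed.

(** * Complex power series *)

Definition is_Cseries (a : nat -> C) (l : C) : Prop := @is_series C_AbsRing C_NormedModule a l.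

Definition Cseries (a : nat -> C) : C :=
  epsilon (inhabits (RtoC 0)) (fun l => is_Cseries a l).

Lemma Cseries_correct a : (exists l, is_Cseries a l) -> is_Cseries a (Cseries a).
Proof. intros H. unfold Cseries. apply epsilon_spec. exact H. Qed.

Lemma is_Cseries_unique a l1 l2 : is_Cseries a l1 -> is_Cseries a l2 -> l1 = l2.
Proof. apply (filterlim_locally_unique (V := C_NormedModule) (sum_n a)). Qed.

Lemma ex_Cseries_Cmod a : ex_series (fun k => Cmod (a k)) -> exists l, is_Cseries a l.
Proof.
  intros H.
  destruct (ex_series_le (V := C_CompleteNormedModule) a (fun k => Cmod (a k))) as [l Hl];
    [intros; apply Rle_refl | exact H |].
  exists l. exact Hl.
Qed.

Lemma Cmod_Cseries_le a l b L : is_Cseries a l -> is_series b L ->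
  (forall k, Cmod (a k) <= b k) -> Cmod l <= L.
Proof.
  intros Ha Hb H.
  assert (H1 : is_lim_seq (fun n => Cmod (sum_n a n)) (Cmod l)) by
    exact (filterlim_comp _ _ _ (sum_n a) (@norm C_AbsRing C_NormedModule) _ _ _ Ha
             (filterlim_norm (V := C_NormedModule) l)).
  assert (H2 : is_lim_seq (sum_n b) L) by exact Hb.
  refine (is_lim_seq_le _ _ _ _ (fun n => _) H1 H2).
  eapply Rle_trans; [exact (norm_sum_n_m (V := C_NormedModule) a 0 n)|].
  apply sum_n_m_le. exact H.
Qed.

Lemma sum_n_csum (a : nat -> C) n : @sum_n C_AbelianMonoid a n = csum (S n) a.
Proof.
  induction n; [rewrite sum_O; simpl; ring|].
  rewrite sum_Sn, IHn. reflexivity.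
Qed.

Lemma is_Cseries_finite (a : nat -> C) K :
  (forall k, (K <= k)%nat -> a k = 0%C) -> is_Cseries a (csum K a).
Proof.
  intros H. unfold is_Cseries, is_series.
  apply filterlim_ext_loc with (fun _ => csum K a); [|apply filterlim_const].
  exists K. intros n Hn. change (csum K a = @sum_n C_AbelianMonoid a n).
  rewrite sum_n_csum. symmetry.
  assert (Hn' : (K <= S n)%nat) by lia. clear Hn.
  induction Hn' as [|n' Hn' IH]; [reflexivity|].
  simpl. rewrite <- IH, H by lia. ring.
Qed.

Lemma is_Cseries_minus a b la lb : is_Cseries a la -> is_Cseries b lb ->
  is_Cseries (fun k => a k - b k)%C (la - lb)%C.
Proof. apply (is_series_minus (V := C_NormedModule)). Qed.

Lemma is_Cseries_scal c a la : is_Cseries a la -> is_Cseries (fun k => c * a k)%C (c * la)%C.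
Proof. apply (is_series_scal (V := C_NormedModule)). Qed.

Lemma is_Cseries_ext a b l : (forall k, a k = b k) -> is_Cseries a l -> is_Cseries b l.
Proof. apply (is_series_ext (V := C_NormedModule)). Qed.

Lemma is_Cseries_shift (a : nat -> C) l : a 0%nat = 0%C -> is_Cseries a l -> is_Cseries (fun k => a (S k)) l.
Proof.
  intros H0 H. apply (is_series_incr_1 (V := C_NormedModule) a l).
  rewrite H0. change (plus l (RtoC 0)) with (l + 0)%C. rewrite Cplus_0_r. exact H.
Qed.

Lemma is_Cseries_bounded a l : is_Cseries a l -> exists M, forall k, Cmod (a k) <= M.
Proof.
  intros H.
  destruct (proj1 (filterlim_locally_ball_norm (K := C_AbsRing) (U := C_NormedModule)
    (F := eventually) (sum_n a) l) H (mkposreal 1 Rlt_0_1)) as [N HN].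
  set (Sa := rsum (S N) (fun k => Cmod (a k))).
  assert (HS : 0 <= Sa) by (apply rsum_ge0; intros; apply Cmod_ge_0).
  exists (2 + Sa). intros k. destruct (le_lt_dec k N) as [Hk|Hk].
  - assert (Cmod (a k) <= Sa); [|lra].
    unfold Sa. clear -Hk. induction N; simpl.
    + replace k with 0%nat by lia. pose proof (Cmod_ge_0 (a 0%nat)). lra.
    + destruct (Nat.eq_dec k (S N)) as [->|Hne].
      * pose proof (rsum_ge0 (S N) (fun k => Cmod (a k)) (fun k _ => Cmod_ge_0 _)).
        simpl in H. lra.
      * specialize (IHN ltac:(lia)). pose proof (Cmod_ge_0 (a (S N))). simpl in IHN. lra.
  - destruct k as [|k]; [lia|].
    pose proof (HN k ltac:(lia)) as H1. pose proof (HN (S k) ltac:(lia)) as H2.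
    unfold ball_norm in H1, H2. simpl in H1, H2.
    change (Cmod (@sum_n C_AbelianMonoid a k - l)%C < 1) in H1.
    change (Cmod (@sum_n C_AbelianMonoid a (S k) - l)%C < 1) in H2.
    rewrite !sum_n_csum in *. simpl csum in *.
    replace (a (S k)) with ((csum k a + a k + a (S k) - l) - (csum k a + a k - l))%C by ring.
    eapply Rle_trans; [unfold Cminus at 1; apply Cmod_triangle|].
    rewrite Cmod_opp. lra.
Qed.

Lemma INR_S_mul_pow_bounded s : 0 <= s < 1 -> exists c, forall k, INR (S k) * s ^ k <= c.
Proof.
  intros Hs. destruct (Req_dec s 0) as [->|Hs0].
  - exists 1. intros [|k]; simpl; [lra|]. rewrite Rmult_0_l, Rmult_0_r. lra.
  - assert (Hl : ln s < 0) by (rewrite <- ln_1; apply ln_increasing; lra).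
    set (t := - ln s). assert (Ht : 0 < t) by (unfold t; lra).
    exists (/ t + 1). intros k.
    rewrite <- Rpower_pow, S_INR by lra. unfold Rpower.
    (* [k s^k = k t e^{-k t} <= 1/t] because [k t < e^{k t}] *)
    assert (E : exp (INR k * ln s) * exp (INR k * t) = 1).
    { rewrite <- exp_plus. unfold t. replace (INR k * ln s + INR k * - ln s) with 0 by ring.
      apply exp_0. }
    assert (H1 : INR k * t < exp (INR k * t)).
    { pose proof (pos_INR k). destruct (Req_dec (INR k * t) 0) as [->|Hkt];
        [rewrite exp_0; lra | pose proof (exp_ineq1 (INR k * t) Hkt); lra]. }
    assert (H2 : exp (INR k * ln s) <= 1).
    { rewrite <- exp_0. destruct k; [simpl; rewrite Rmult_0_l; lra|].
      left. apply exp_increasing. pose proof (pos_INR k). rewrite S_INR. nra. }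
    set (e := exp (INR k * ln s)) in *. set (F := exp (INR k * t)) in *.
    assert (0 < e) by apply exp_pos.
    assert (INR k * t * e < 1) by nra.
    assert (INR k * e < / t)
      by (apply Rmult_lt_reg_r with t; [auto|]; rewrite Rinv_l by lra; nra).
    nra.
Qed.

(* The power series [sum a_k z^k] has radius of convergence at least [r]. *)
Definition radius_ge (r : R) (a : nat -> C) : Prop :=
  forall rho, 0 <= rho < r -> exists M, forall k, Cmod (a k) * rho ^ k <= M.

Definition CPS_derive (a : nat -> C) (k : nat) : C := (RtoC (INR (S k)) * a (S k))%C.

Fixpoint CPS_derive_n (j : nat) (a : nat -> C) : nat -> C :=
  match j with O => a | S j' => CPS_derive (CPS_derive_n j' a) end.

Definition CPSeries (a : nat -> C) (z : C) : C := Cseries (fun k => a k * Cpow z k)%C.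

Lemma radius_ge_le r a b : (forall k, Cmod (b k) <= Cmod (a k)) -> radius_ge r a -> radius_ge r b.
Proof.
  intros H Ha rho Hr. destruct (Ha rho Hr) as [M HM]. exists M. intros k.
  eapply Rle_trans; [|apply HM]. apply Rmult_le_compat_r; [apply pow_le; lra | auto].
Qed.

Lemma radius_ge_of_is_Cseries r (a : nat -> C) (f : C -> C) :
  (forall z, Cmod z < r -> is_Cseries (fun k => a k * Cpow z k)%C (f z)) -> radius_ge r a.
Proof.
  intros H rho Hr.
  assert (Hz : Cmod (RtoC rho) < r) by (rewrite Cmod_R, Rabs_pos_eq; lra).
  destruct (is_Cseries_bounded _ _ (H _ Hz)) as [M HM]. exists M. intros k.
  specialize (HM k). rewrite Cmod_mult, Cmod_pow, Cmod_R, Rabs_pos_eq in HM by lra. auto.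
Qed.

Lemma radius_ge_bound_ge0 (a : nat -> C) rho M :
  (forall k, Cmod (a k) * rho ^ k <= M) -> 0 <= M.
Proof. intros H. specialize (H 0%nat). simpl in H. pose proof (Cmod_ge_0 (a 0%nat)). lra. Qed.

(* Comparing with a radius [rho' = (rho + r)/2] in between leaves a geometric
   factor [(rho/rho')^k] to absorb the polynomial weight. *)
Lemma radius_ge_ex_series_deriv r a rho : radius_ge r a -> 0 <= rho < r ->
  ex_series (fun k => INR (S k) * Cmod (a k) * rho ^ k).
Proof.
  intros Ha Hr. set (r' := (rho + r) / 2).
  destruct (Ha r' ltac:(unfold r'; lra)) as [M HM].
  pose proof (radius_ge_bound_ge0 a r' M HM) as HM0.
  set (q := rho / r').
  assert (Hq : 0 <= q < 1).
  { unfold q, r'. split; [apply Rmult_le_pos; [lra|left; apply Rinv_0_lt_compat; lra]|].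
    apply Rmult_lt_reg_r with ((rho + r) / 2); [lra|].
    unfold Rdiv. rewrite Rmult_assoc, Rinv_l by lra. lra. }
  set (sq := sqrt q).
  assert (Hsq : 0 <= sq < 1).
  { unfold sq. split; [apply sqrt_pos|]. rewrite <- sqrt_1. apply sqrt_lt_1_alt. lra. }
  destruct (INR_S_mul_pow_bounded sq Hsq) as [c Hc].
  apply (ex_series_le (V := R_CompleteNormedModule) _ (fun k => (c * M) * sq ^ k)).
  - intros k. change (norm (INR (S k) * Cmod (a k) * rho ^ k))
      with (Rabs (INR (S k) * Cmod (a k) * rho ^ k)).
    rewrite Rabs_pos_eq by (repeat apply Rmult_le_pos;
      [apply pos_INR | apply Cmod_ge_0 | apply pow_le; lra]).
    assert (Erho : rho = q * r') by (unfold q; field; unfold r'; lra).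
    assert (Eq : q ^ k = sq ^ k * sq ^ k)
      by (rewrite <- Rpow_mult_distr; unfold sq; rewrite sqrt_sqrt; lra).
    rewrite Erho, Rpow_mult_distr, Eq.
    specialize (HM k). specialize (Hc k).
    assert (0 <= sq ^ k) by (apply pow_le; lra).
    assert (0 <= INR (S k) * sq ^ k) by (apply Rmult_le_pos; [apply pos_INR|auto]).
    replace (INR (S k) * Cmod (a k) * (sq ^ k * sq ^ k * r' ^ k)) with
      ((INR (S k) * sq ^ k) * (Cmod (a k) * r' ^ k) * sq ^ k) by ring.
    apply Rmult_le_compat_r; auto. apply Rmult_le_compat; auto.
    apply Rmult_le_pos; [apply Cmod_ge_0 | apply pow_le; unfold r'; lra].
  - destruct (ex_series_geom sq ltac:(rewrite Rabs_pos_eq; lra)) as [L HL].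
    exists (c * M * L). apply (is_series_scal_l (V := R_NormedModule) (c * M) _ L HL).
Qed.

Lemma radius_ge_ex_series r a rho : radius_ge r a -> 0 <= rho < r ->
  ex_series (fun k => Cmod (a k) * rho ^ k).
Proof.
  intros Ha Hr.
  apply (ex_series_le (V := R_CompleteNormedModule) _ (fun k => INR (S k) * Cmod (a k) * rho ^ k));
    [|exact (radius_ge_ex_series_deriv r a rho Ha Hr)].
  intros k. change (norm (Cmod (a k) * rho ^ k)) with (Rabs (Cmod (a k) * rho ^ k)).
  assert (0 <= Cmod (a k) * rho ^ k) by (apply Rmult_le_pos; [apply Cmod_ge_0|apply pow_le; lra]).
  rewrite Rabs_pos_eq, S_INR by auto. pose proof (pos_INR k). nra.
Qed.

Lemma radius_ge_CPS_derive r a : radius_ge r a -> radius_ge r (CPS_derive a).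
Proof.
  intros Ha rho Hr. set (r' := (rho + r) / 2).
  destruct (Ha r' ltac:(unfold r'; lra)) as [M HM].
  pose proof (radius_ge_bound_ge0 a r' M HM) as HM0.
  set (q := rho / r').
  assert (Hq : 0 <= q < 1).
  { unfold q, r'. split; [apply Rmult_le_pos; [lra|left; apply Rinv_0_lt_compat; lra]|].
    apply Rmult_lt_reg_r with ((rho + r) / 2); [lra|].
    unfold Rdiv. rewrite Rmult_assoc, Rinv_l by lra. lra. }
  destruct (INR_S_mul_pow_bounded q Hq) as [c Hc].
  assert (Hr' : 0 < r') by (unfold r'; lra).
  exists (c * M / r'). intros k. unfold CPS_derive.
  rewrite Cmod_mult, Cmod_R, Rabs_pos_eq by apply pos_INR.
  assert (Erho : rho = q * r') by (unfold q; field; lra).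
  rewrite Erho, Rpow_mult_distr.
  specialize (HM (S k)). specialize (Hc k). simpl in HM.
  assert (0 <= q ^ k) by (apply pow_le; lra).
  assert (0 <= INR (S k) * q ^ k) by (apply Rmult_le_pos; [apply pos_INR|auto]).
  assert (Cmod (a (S k)) * r' ^ k <= M / r').
  { apply Rmult_le_reg_r with r'; [auto|]. unfold Rdiv.
    rewrite (Rmult_assoc M), Rinv_l, Rmult_1_r by lra. lra. }
  replace (INR (S k) * Cmod (a (S k)) * (q ^ k * r' ^ k)) with
    ((INR (S k) * q ^ k) * (Cmod (a (S k)) * r' ^ k)) by ring.
  unfold Rdiv. rewrite (Rmult_assoc c).
  apply Rmult_le_compat; auto. apply Rmult_le_pos; [apply Cmod_ge_0 | apply pow_le; lra].
Qed.

Lemma radius_ge_CPS_derive_n r a j : radius_ge r a -> radius_ge r (CPS_derive_n j a).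
Proof. intros H; induction j; simpl; auto. apply radius_ge_CPS_derive; auto. Qed.

Lemma CPSeries_correct r a z : radius_ge r a -> Cmod z < r ->
  is_Cseries (fun k => a k * Cpow z k)%C (CPSeries a z).
Proof.
  intros Ha Hz. apply Cseries_correct, ex_Cseries_Cmod.
  eapply ex_series_ext; [|apply (radius_ge_ex_series r a (Cmod z) Ha); split; [apply Cmod_ge_0|auto]].
  intros k. simpl. rewrite Cmod_mult, Cmod_pow. auto.
Qed.

Definition pow_taylor_rem (w z : C) (k : nat) : C :=
  (Cpow w (S k) - Cpow z (S k) - RtoC (INR (S k)) * Cpow z k * (w - z))%C.

Lemma pow_taylor_rem_S w z k : pow_taylor_rem w z (S k) =
  (w * pow_taylor_rem w z k + RtoC (INR (S k)) * Cpow z k * ((w - z) * (w - z)))%C.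
Proof. unfold pow_taylor_rem. rewrite !Cpow_S, (S_INR (S k)), RtoC_plus. ring. Qed.

Lemma Cmod_pow_taylor_rem_le w z rho k : 0 < rho -> Cmod w <= rho -> Cmod z <= rho ->
  rho * Cmod (pow_taylor_rem w z k) <= INR (S k) ^ 2 * rho ^ k * Cmod (w - z) ^ 2.
Proof.
  intros Hr Hw Hz. set (h := Cmod (w - z)).
  assert (Hh : 0 <= h) by apply Cmod_ge_0.
  induction k.
  - unfold pow_taylor_rem. simpl.
    replace (w * 1 - z * 1 - 1 * 1 * (w - z))%C with (RtoC 0) by ring.
    rewrite Cmod_0. simpl. nra.
  - rewrite pow_taylor_rem_S.
    eapply Rle_trans; [apply Rmult_le_compat_l; [lra|apply Cmod_triangle]|].
    rewrite !Cmod_mult, Cmod_R, Rabs_pos_eq, Cmod_pow by apply pos_INR. fold h.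
    pose proof (Cmod_ge_0 (pow_taylor_rem w z k)) as HE.
    assert (Hzk : Cmod z ^ k <= rho ^ k) by (apply pow_incr; split; [apply Cmod_ge_0|auto]).
    assert (0 <= Cmod z ^ k) by (apply pow_le, Cmod_ge_0).
    rewrite (S_INR (S k)). set (K := INR (S k)) in *.
    assert (HK : 0 <= K) by (unfold K; apply pos_INR).
    assert (0 <= rho ^ k) by (apply pow_le; lra).
    set (P := rho * rho ^ k * (h * h)).
    assert (HP : 0 <= P) by (unfold P; apply Rmult_le_pos; [apply Rmult_le_pos|]; nra).
    assert (H1 : rho * (Cmod w * Cmod (pow_taylor_rem w z k)) <= K * K * P).
    { replace (K * K * P) with (rho * (K ^ 2 * rho ^ k * h ^ 2)) by (unfold P; ring).
      replace (rho * (Cmod w * Cmod (pow_taylor_rem w z k)))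
        with (Cmod w * (rho * Cmod (pow_taylor_rem w z k))) by ring.
      apply Rmult_le_compat; auto; [apply Cmod_ge_0|apply Rmult_le_pos; lra]. }
    assert (H2 : rho * (K * Cmod z ^ k * (h * h)) <= K * P).
    { unfold P. replace (K * (rho * rho ^ k * (h * h))) with (rho * (K * rho ^ k * (h * h))) by ring.
      apply Rmult_le_compat_l; [lra|]. apply Rmult_le_compat_r; [nra|].
      apply Rmult_le_compat_l; auto. }
    assert (0 <= K * P) by (apply Rmult_le_pos; auto).
    rewrite Rmult_plus_distr_l.
    match goal with |- _ <= ?Q => replace Q with ((K + 1) * (K + 1) * P) by (unfold P; simpl; ring) end.
    nra.
Qed.

Lemma Cmod_CPSeries_taylor_le r a z w r1 : radius_ge r a -> Cmod z < r1 < r -> Cmod w <= r1 ->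
  Cmod (CPSeries a w - CPSeries a z - (w - z) * CPSeries (CPS_derive a) z)%C <=
  Series (fun k => INR (S k) * Cmod (CPS_derive a k) * r1 ^ k) * (Cmod (w - z) ^ 2 / r1).
Proof.
  intros Ha Hr1 Hw. pose proof (Cmod_ge_0 z) as Hz0.
  pose proof (radius_ge_CPS_derive r a Ha) as Ha'.
  pose proof (Series_correct _ (radius_ge_ex_series_deriv r (CPS_derive a) r1 Ha' ltac:(lra)))
    as HSd.
  pose proof (is_Cseries_minus _ _ _ _ (CPSeries_correct r a w Ha ltac:(lra))
    (CPSeries_correct r a z Ha ltac:(lra))) as H1.
  apply is_Cseries_shift in H1; [|simpl; ring].
  pose proof (is_Cseries_minus _ _ _ _ H1
    (is_Cseries_scal (w - z) _ _ (CPSeries_correct r (CPS_derive a) z Ha' ltac:(lra)))) as H2.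
  apply (is_Cseries_ext _ (fun k => a (S k) * pow_taylor_rem w z k)%C) in H2;
    [|intros k; unfold pow_taylor_rem, CPS_derive; ring].
  apply (Cmod_Cseries_le _ _ _ _ H2 (is_series_scal_r (Cmod (w - z) ^ 2 / r1) _ _ HSd)).
  intros k. unfold CPS_derive. rewrite !Cmod_mult, Cmod_R, Rabs_pos_eq by apply pos_INR.
  pose proof (Cmod_pow_taylor_rem_le w z r1 k ltac:(lra) Hw ltac:(lra)) as HE.
  replace (INR (S k) * (INR (S k) * Cmod (a (S k))) * r1 ^ k * (Cmod (w - z) ^ 2 / r1)) with
    (Cmod (a (S k)) * (INR (S k) ^ 2 * r1 ^ k * Cmod (w - z) ^ 2 / r1)) by (field; lra).
  apply Rmult_le_compat_l; [apply Cmod_ge_0|].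
  apply Rmult_le_reg_l with r1; [lra|].
  replace (r1 * (INR (S k) ^ 2 * r1 ^ k * Cmod (w - z) ^ 2 / r1))
    with (INR (S k) ^ 2 * r1 ^ k * Cmod (w - z) ^ 2) by (field; lra).
  exact HE.
Qed.

Lemma is_Cderive_CPSeries r a z : radius_ge r a -> Cmod z < r ->
  is_Cderive (CPSeries a) z (CPSeries (CPS_derive a) z).
Proof.
  intros Ha Hz. pose proof (Cmod_ge_0 z) as Hz0.
  set (r1 := (Cmod z + r) / 2).
  assert (Hr1 : Cmod z < r1 < r) by (unfold r1; lra).
  set (Sd := Series (fun k => INR (S k) * Cmod (CPS_derive a k) * r1 ^ k)).
  set (S1 := Rabs Sd + 1).
  assert (HS1 : 0 < S1) by (unfold S1; pose proof (Rabs_pos Sd); lra).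
  apply is_Cderive_approx. intros eps Heps.
  exists (Rmin (r1 - Cmod z) (eps * r1 / S1)). split.
  { apply Rmin_glb_lt; [lra|]. apply Rmult_lt_0_compat; [nra|]. apply Rinv_0_lt_compat; auto. }
  intros w Hw.
  assert (Hwa : Cmod (w - z) < r1 - Cmod z) by (eapply Rlt_le_trans; [exact Hw|apply Rmin_l]).
  assert (Hwb : Cmod (w - z) < eps * r1 / S1) by (eapply Rlt_le_trans; [exact Hw|apply Rmin_r]).
  assert (Hwr : Cmod w <= r1).
  { replace w with (z + (w - z))%C by ring. eapply Rle_trans; [apply Cmod_triangle|lra]. }
  eapply Rle_trans; [apply (Cmod_CPSeries_taylor_le r a z w r1 Ha Hr1 Hwr)|]. fold Sd.
  set (h := Cmod (w - z)) in *.
  assert (Hh : 0 <= h) by apply Cmod_ge_0.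
  assert (Sd <= S1) by (unfold S1; pose proof (Rle_abs Sd); lra).
  assert (h * S1 <= eps * r1).
  { apply Rmult_le_reg_r with (/ S1); [apply Rinv_0_lt_compat; auto|].
    rewrite Rmult_assoc, Rinv_r by lra. unfold Rdiv in Hwb. lra. }
  apply Rmult_le_reg_r with r1; [lra|].
  replace (Sd * (h ^ 2 / r1) * r1) with (Sd * h * h) by (field; lra).
  assert (Sd * h * h <= S1 * h * h)
    by (apply Rmult_le_compat_r; auto; apply Rmult_le_compat_r; auto).
  nra.
Qed.

Definition CPSeries_derivs (a : nat -> C) (j : nat) (z : C) : C := CPSeries (CPS_derive_n j a) z.

Lemma Cderivs_on_CPSeries U r a : radius_ge r a -> (forall z, U z -> Cmod z < r) ->
  Cderivs_on U (CPSeries_derivs a).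
Proof.
  intros Ha HU j z Hz. apply (is_Cderive_CPSeries r); [apply radius_ge_CPS_derive_n|]; auto.
Qed.

Lemma CPS_derive_n_zero (a : nat -> C) K : (forall k, (k < K)%nat -> a k = 0%C) ->
  forall j k, (k + j < K)%nat -> CPS_derive_n j a k = 0%C.
Proof.
  intros H j. induction j; intros k Hk; simpl; [apply H; lia|].
  unfold CPS_derive. rewrite IHj by lia. ring.
Qed.

Definition tail_coefs (K : nat) (a : nat -> C) (k : nat) : C :=
  if Nat.leb K k then a k else 0%C.

Lemma radius_ge_tail_coefs r K a : radius_ge r a -> radius_ge r (tail_coefs K a).
Proof.
  apply radius_ge_le. intros k. unfold tail_coefs.
  destruct (Nat.leb K k); [lra|]. rewrite Cmod_0. apply Cmod_ge_0.
Qed.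

Lemma CPS_derive_n_tail_coefs K a j k :
  CPS_derive_n j (tail_coefs K a) k = if Nat.leb K (k + j) then CPS_derive_n j a k else 0%C.
Proof.
  revert k; induction j; intros k; simpl.
  - unfold tail_coefs. rewrite Nat.add_0_r. auto.
  - unfold CPS_derive. rewrite IHj. replace (S k + j)%nat with (k + S j)%nat by lia.
    destruct (Nat.leb K (k + S j)); auto. ring.
Qed.

Lemma pow_le_shift r eps (k j K : nat) : 0 < r <= eps -> (K <= k + j)%nat ->
  r ^ k <= eps ^ k * powerRZ eps (Z.of_nat j - Z.of_nat K) * powerRZ r (Z.of_nat K - Z.of_nat j).
Proof.
  intros Hr Hk. set (d := (k + j - K)%nat).
  rewrite !pow_powerRZ.
  replace (Z.of_nat k) with ((Z.of_nat K - Z.of_nat j) + Z.of_nat d)%Z by (unfold d; lia).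
  rewrite !powerRZ_add, <- !pow_powerRZ by lra.
  assert (E : powerRZ eps (Z.of_nat K - Z.of_nat j) * powerRZ eps (Z.of_nat j - Z.of_nat K) = 1).
  { rewrite <- powerRZ_add by lra.
    replace (Z.of_nat K - Z.of_nat j + (Z.of_nat j - Z.of_nat K))%Z with 0%Z by lia. auto. }
  assert (r ^ d <= eps ^ d) by (apply pow_incr; lra).
  assert (0 < powerRZ r (Z.of_nat K - Z.of_nat j)) by (apply powerRZ_lt; lra).
  match goal with |- _ <= ?Q => replace Q with
    ((powerRZ eps (Z.of_nat K - Z.of_nat j) * powerRZ eps (Z.of_nat j - Z.of_nat K)) *
     (eps ^ d * powerRZ r (Z.of_nat K - Z.of_nat j))) by ring end.
  rewrite E. nra.
Qed.

Lemma derivs_O_CPSeries U r a K eps : radius_ge r a -> (forall k, (k < K)%nat -> a k = 0%C) ->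
  0 < eps < r -> in_punctured_unit_disc U -> (forall z, U z -> Cmod z <= eps) ->
  derivs_O U (CPSeries_derivs a) (Z.of_nat K) 0.
Proof.
  intros Ha HK He HU Hue j.
  pose proof (radius_ge_CPS_derive_n r a j Ha) as Haj.
  pose proof (Series_correct _ (radius_ge_ex_series r (CPS_derive_n j a) eps Haj ltac:(lra)))
    as HSe.
  set (Se := Series (fun k => Cmod (CPS_derive_n j a k) * eps ^ k)) in *.
  set (c := powerRZ eps (Z.of_nat j - Z.of_nat K)).
  assert (Hc : 0 <= c) by (apply powerRZ_le; lra).
  exists (Rabs Se * c). split; [apply Rmult_le_pos; [apply Rabs_pos|auto]|].
  intros z Hz. pose proof (HU z Hz) as Hr. pose proof (Hue z Hz) as Hre.
  set (c' := c * powerRZ (Cmod z) (Z.of_nat K - Z.of_nat j)).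
  assert (Hc' : 0 <= c') by (unfold c'; apply Rmult_le_pos; [auto|apply powerRZ_le; lra]).
  eapply Rle_trans; [apply (Cmod_Cseries_le _ _ _ _
    (CPSeries_correct r (CPS_derive_n j a) z Haj ltac:(lra)) (is_series_scal_r c' _ _ HSe))|].
  - intros k. rewrite Cmod_mult, Cmod_pow.
    destruct (le_lt_dec K (k + j)) as [Hkj|Hkj].
    + pose proof (pow_le_shift (Cmod z) eps k j K ltac:(lra) Hkj).
      unfold c', c. rewrite !Rmult_assoc, <- (Rmult_assoc (eps ^ k)).
      apply Rmult_le_compat_l; [apply Cmod_ge_0|auto].
    + rewrite (CPS_derive_n_zero a K HK j k Hkj), Cmod_0, !Rmult_0_l. lra.
  - unfold weight, c'. simpl pow. rewrite Rmult_1_r, <- Rmult_assoc.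
    apply Rmult_le_compat_r; [apply powerRZ_le; lra|].
    apply Rmult_le_compat_r; [auto|apply Rle_abs].
Qed.

Lemma pow_le_pow_le1 s N k : 0 <= s <= 1 -> (N <= k)%nat -> s ^ k <= s ^ N.
Proof.
  intros Hs Hk. replace k with (N + (k - N))%nat by lia. rewrite pow_add.
  assert (0 <= s ^ N) by (apply pow_le; lra).
  assert (s ^ (k - N) <= 1) by (rewrite <- (pow1 (k - N)); apply pow_incr; lra).
  assert (0 <= s ^ (k - N)) by (apply pow_le; lra). nra.
Qed.

Lemma Cmod_CPSeries_le_geom r b z c s : radius_ge r b -> Cmod z < r -> 0 <= s < 1 ->
  (forall k, Cmod (b k) * Cmod z ^ k <= c * s ^ k) -> Cmod (CPSeries b z) <= c / (1 - s).
Proof.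
  intros Hb Hz Hs H.
  apply (Cmod_Cseries_le _ _ _ _ (CPSeries_correct r b z Hb Hz)
    (is_series_scal_l (V := R_NormedModule) c _ _
      (is_series_geom s ltac:(rewrite Rabs_pos_eq; lra)))).
  intros k. rewrite Cmod_mult, Cmod_pow. exact (H k).
Qed.

Lemma CPSeries_derivs_tail r a eps j : radius_ge r a -> 0 < eps < r -> forall eta, 0 < eta ->
  eventually (fun K => forall z, Cmod z <= eps ->
    Cmod (CPSeries_derivs (tail_coefs K a) j z) <= eta).
Proof.
  intros Ha He eta Heta.
  set (r' := (eps + r) / 2).
  destruct (radius_ge_CPS_derive_n r a j Ha r' ltac:(unfold r'; lra)) as [M HM].
  pose proof (radius_ge_bound_ge0 _ r' M HM) as HM0.
  set (s := sqrt (eps / r')).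
  assert (Hs : 0 <= s < 1).
  { unfold s. split; [apply sqrt_pos|]. rewrite <- sqrt_1. apply sqrt_lt_1_alt.
    split; [apply Rmult_le_pos; [lra|left; apply Rinv_0_lt_compat; unfold r'; lra]|].
    apply Rmult_lt_reg_r with r'; [unfold r'; lra|].
    unfold Rdiv. rewrite Rmult_assoc, Rinv_l by (unfold r'; lra). unfold r'; lra. }
  assert (Hss : s * s = eps / r') by (unfold s; apply sqrt_sqrt; apply Rle_mult_inv_pos; unfold r'; lra).
  set (y := eta * (1 - s) / (M + 1)).
  assert (Hy : 0 < y) by (unfold y; apply Rmult_lt_0_compat; [nra|apply Rinv_0_lt_compat; lra]).
  destruct (pow_lt_1_zero s ltac:(rewrite Rabs_pos_eq; lra) y Hy) as [N HN].
  pose proof (HN N (le_n N)) as HsN. rewrite Rabs_pos_eq in HsN by (apply pow_le; lra).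
  exists (N + j)%nat. intros K HK z Hz.
  eapply Rle_trans; [apply (Cmod_CPSeries_le_geom r _ z (M * s ^ N) s); auto; try lra|].
  - apply radius_ge_CPS_derive_n, radius_ge_tail_coefs, Ha.
  - intros k. rewrite CPS_derive_n_tail_coefs.
    assert (0 <= s ^ N) by (apply pow_le; lra). assert (0 <= s ^ k) by (apply pow_le; lra).
    destruct (Nat.leb K (k + j)) eqn:E;
      [|rewrite Cmod_0, Rmult_0_l; repeat apply Rmult_le_pos; auto].
    apply Nat.leb_le in E. specialize (HM k).
    assert (Hrk : Cmod z ^ k <= eps ^ k) by (apply pow_incr; split; [apply Cmod_ge_0|auto]).
    (* [eps^k = r'^k s^k s^k]: one [s^k] beats [M], the other is [<= s^N] *)
    assert (Eeps : eps ^ k = r' ^ k * (s ^ k * s ^ k)).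
    { rewrite <- !Rpow_mult_distr, Hss. f_equal. field. unfold r'; lra. }
    assert (HskN : s ^ k <= s ^ N) by (apply pow_le_pow_le1; lia || lra).
    eapply Rle_trans; [apply Rmult_le_compat_l; [apply Cmod_ge_0|exact Hrk]|].
    rewrite Eeps.
    replace (Cmod (CPS_derive_n j a k) * (r' ^ k * (s ^ k * s ^ k)))
      with ((Cmod (CPS_derive_n j a k) * r' ^ k) * s ^ k * s ^ k) by ring.
    apply Rmult_le_compat_r; auto. apply Rmult_le_compat; auto.
    apply Rmult_le_pos; [apply Cmod_ge_0|apply pow_le; unfold r'; lra].
  - apply Rmult_le_reg_r with (1 - s); [lra|]. unfold Rdiv. rewrite Rmult_assoc, Rinv_l by lra.
    assert (M * s ^ N <= M * y) by (apply Rmult_le_compat_l; lra).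
    assert (M * y <= eta * (1 - s)); [|lra].
    unfold y. apply Rmult_le_reg_r with (M + 1); [lra|]. unfold Rdiv.
    replace (M * (eta * (1 - s) * / (M + 1)) * (M + 1)) with (M * (eta * (1 - s)))
      by (field; lra).
    assert (0 <= eta * (1 - s)) by nra. nra.
Qed.

Lemma Cseries_minus_CPSeries r (a b : nat -> C) (l : C) z K (sel : nat -> C) :
  is_Cseries (fun k => a k * Cpow z k)%C l -> radius_ge r b -> Cmod z < r ->
  (forall k, (K <= k)%nat -> a k = b k) ->
  (forall k, (k < K)%nat -> (a k - b k = sel k * a k)%C) ->
  (l - CPSeries b z)%C = csum K (fun k => sel k * a k * Cpow z k)%C.
Proof.
  intros Ha Hb Hz H1 H2.
  pose proof (is_Cseries_minus _ _ _ _ Ha (CPSeries_correct r b z Hb Hz)) as H3.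
  pose proof (is_Cseries_finite (fun k => a k * Cpow z k - b k * Cpow z k)%C K) as H4.
  rewrite (is_Cseries_unique _ _ _ H3 (H4 ltac:(intros k Hk; cbv beta; rewrite H1 by auto; ring))).
  apply csum_ext. intros k Hk. rewrite <- H2 by auto. ring.
Qed.

(** * The expansion of [Omega] *)

Definition exp_coef (l : nat) : C := Cdiv (Cpow cst l) (RtoC (INR (fact l))).

(* Derivatives of [sum_(l <= n) sum_(p < m) exp_coef l (N^l)_(i p) (log 1/z)^l g_(l p)(z)],
   where [g_(l p)] is the power series with coefficients [b l p]. *)
Definition logPS_derivs (m n : nat) (N : Mat) (b : nat -> nat -> nat -> C)
    (j : nat) (z : C) : Vec :=
  fun i => csum (S n) (fun l => csum m (fun p =>
    exp_coef l * matpow m N l i p * Cderivs_mul (log1z_pow_derivs l) (CPSeries_derivs (b l p)) j z))%C.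

Lemma Cderivs_on_logPS m n N b U r i :
  (forall l p, (p < m)%nat -> radius_ge r (b l p)) ->
  (forall z, U z -> slit_plane z /\ Cmod z < r) ->
  Cderivs_on U (fun j z => logPS_derivs m n N b j z i).
Proof.
  intros Hb HU. apply Cderivs_on_csum. intros l _. apply Cderivs_on_csum. intros p Hp.
  apply Cderivs_on_scal, Cderivs_on_mul.
  - apply Cderivs_on_log1z_pow. intros z Hz; apply HU; auto.
  - apply (Cderivs_on_CPSeries U r); auto. intros z Hz; apply HU; auto.
Qed.

Lemma Omega_expand m n N Aval z i : Omega m n N Aval z i =
  csum (S n) (fun l => csum m (fun p =>
    exp_coef l * matpow m N l i p * (Cpow (log1z z) l * Aval z p)))%C.
Proof.
  unfold Omega. apply csum_ext; intros l _. unfold matvec. rewrite <- csum_mull.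
  apply csum_ext; intros p _. unfold exp_coef, Cdiv. rewrite Cpow_mult_l. ring.
Qed.

Lemma Omega_minus_logPS m n N A Aval b z i K (sel : nat -> nat -> C) :
  (forall l p, (l < S n)%nat -> (p < m)%nat ->
     (Aval z p - CPSeries (b l p) z = csum K (fun k => sel l k * A k p * Cpow z k))%C) ->
  (Omega m n N Aval z i - logPS_derivs m n N b 0 z i)%C =
  csum K (fun k => csum (S n) (fun l => sel l k * (Akl m N A k l i * fkl k l z)))%C.
Proof.
  intros H. rewrite Omega_expand. unfold logPS_derivs. rewrite <- csum_minus.
  transitivity (csum (S n) (fun l => csum K (fun k => csum m (fun p =>
    exp_coef l * matpow m N l i p * Cpow (log1z z) l * (sel l k * A k p * Cpow z k)))))%C.
  { apply csum_ext; intros l Hl. rewrite <- csum_minus, <- csum_swap.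
    apply csum_ext; intros p Hp.
    unfold CPSeries_derivs. rewrite Cderivs_mul_0, log1z_pow_derivs_0, csum_mull.
    simpl CPS_derive_n. rewrite <- H by auto. ring. }
  rewrite csum_swap. apply csum_ext; intros k Hk. apply csum_ext; intros l Hl.
  unfold Akl, fkl, matvec.
  rewrite <- (csum_mull m (Cdiv (Cpow cst l) (RtoC (INR (fact l))))), <- csum_mulr, <- csum_mull.
  apply csum_ext; intros p Hp. unfold exp_coef. ring.
Qed.

Lemma deg_gt_large n mu k l : (l <= n)%nat -> (Z.to_nat (up mu) < k)%nat ->
  deg n (Z.of_nat k) (Z.of_nat l) > mu.
Proof.
  intros Hl Hk. unfold deg. rewrite <- !INR_IZR_INZ.
  destruct (archimed mu) as [H1 H2].
  assert (Hn : 0 < INR (S n)) by (apply lt_0_INR; lia).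
  assert (Hl' : INR l / INR (S n) < 1).
  { apply Rmult_lt_reg_r with (INR (S n)); [auto|]. unfold Rdiv.
    rewrite Rmult_assoc, Rinv_l, Rmult_1_l, Rmult_1_r by lra. apply lt_INR. lia. }
  assert (IZR (up mu) + 1 <= INR k).
  { destruct (Z_lt_le_dec (up mu) 0) as [Hu|Hu].
    - assert (IZR (up mu) <= -1) by (apply IZR_le; lia).
      assert (1 <= INR k) by (apply (le_INR 1); lia). lra.
    - rewrite INR_IZR_INZ, <- plus_IZR. apply IZR_le. lia. }
  lra.
Qed.

Lemma deg_le_below n mu k0 l0 k l : (l0 <= n)%nat ->
  (forall k' l' : Z, deg n k' l' > mu -> deg n k' l' >= deg n (Z.of_nat k0) (Z.of_nat l0)) ->
  (k < (if Nat.leb l l0 then k0 else S k0))%nat -> deg n (Z.of_nat k) (Z.of_nat l) <= mu.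
Proof.
  intros Hl0 Hmin Hk. apply Rnot_lt_le. intros Hd. specialize (Hmin _ _ Hd).
  unfold deg in Hmin. rewrite <- !INR_IZR_INZ in Hmin.
  assert (Hn : 0 < INR (S n)) by (apply lt_0_INR; lia).
  destruct (Nat.leb l l0) eqn:E.
  - assert (INR l0 / INR (S n) < 1).
    { apply Rmult_lt_reg_r with (INR (S n)); [auto|]. unfold Rdiv.
      rewrite Rmult_assoc, Rinv_l, Rmult_1_l, Rmult_1_r by lra. apply lt_INR. lia. }
    assert (0 <= INR l / INR (S n))
      by (apply Rmult_le_pos; [apply pos_INR|left; apply Rinv_0_lt_compat; auto]).
    assert (INR k + 1 <= INR k0) by (rewrite <- S_INR; apply le_INR; lia).
    lra.
  - apply Nat.leb_gt in E.
    assert (INR l0 / INR (S n) < INR l / INR (S n))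
      by (apply Rmult_lt_compat_r; [apply Rinv_0_lt_compat; auto|apply lt_INR; auto]).
    assert (INR k <= INR k0) by (apply le_INR; lia).
    lra.
Qed.

Lemma powerRZ_le_antimono r a b : 0 < r <= 1 -> (b <= a)%Z -> powerRZ r a <= powerRZ r b.
Proof.
  intros Hr Hab. replace a with (b + Z.of_nat (Z.to_nat (a - b)))%Z by lia.
  rewrite powerRZ_add, <- pow_powerRZ by lra.
  assert (0 < powerRZ r b) by (apply powerRZ_lt; lra).
  assert (r ^ Z.to_nat (a - b) <= 1)
    by (rewrite <- (pow1 (Z.to_nat (a - b))); apply pow_incr; lra).
  nra.
Qed.

Lemma pow_le_INR_pow_exp x l : 0 <= x -> x ^ l <= INR l ^ l * exp x.
Proof.
  intros Hx. destruct l as [|l].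
  - simpl. assert (1 <= exp x); [|lra].
    rewrite <- exp_0. destruct (Req_dec x 0) as [->|E]; [lra|left; apply exp_increasing; lra].
  - set (L := INR (S l)). assert (HL : 0 < L) by (unfold L; apply lt_0_INR; lia).
    assert (HxL : 0 <= x / L) by (apply Rmult_le_pos; [lra|left; apply Rinv_0_lt_compat; lra]).
    assert (H1 : x / L <= exp (x / L)).
    { destruct (Req_dec (x / L) 0) as [->|E]; [rewrite exp_0; lra|].
      pose proof (exp_ineq1 (x / L) E). lra. }
    assert (H2 : (x / L) ^ S l <= exp (x / L) ^ S l) by (apply pow_incr; lra).
    replace (exp (x / L) ^ S l) with (exp x) in H2.
    2: { rewrite <- (exp_ln (exp (x / L) ^ S l)) by (apply pow_lt, exp_pos).
         rewrite ln_pow, ln_exp by apply exp_pos. f_equal. fold L. field. lra. }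
    replace (x ^ S l) with (L ^ S l * (x / L) ^ S l)
      by (rewrite <- Rpow_mult_distr; f_equal; field; lra).
    apply Rmult_le_compat_l; [apply pow_le; lra|auto].
Qed.

Lemma Cmod_mul_logbound_pow_bounded l :
  exists D, 0 <= D /\ forall z, 0 < Cmod z < 1 -> Cmod z * logbound z ^ l <= D.
Proof.
  exists (INR l ^ l * exp PI). split.
  { apply Rmult_le_pos; [apply pow_le, pos_INR|left; apply exp_pos]. }
  intros z Hz. unfold logbound.
  pose proof (ln_inv_Cmod_gt0 z Hz) as Ht. set (t := ln (1 / Cmod z)) in *.
  (* with [|z| = e^(-t)], this is [(t + PI)^l e^(-t) <= l^l e^PI] *)
  assert (Er : Cmod z = exp (- t)).
  { unfold t, Rdiv. rewrite Rmult_1_l, ln_Rinv, Ropp_involutive, exp_ln; lra. }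
  pose proof (pow_le_INR_pow_exp (t + PI) l ltac:(pose proof PI_RGT_0; lra)) as H.
  rewrite Er.
  replace (INR l ^ l * exp PI) with (exp (- t) * (INR l ^ l * exp (t + PI))).
  2: { rewrite !exp_plus, <- (Rmult_1_l (INR l ^ l * exp PI)), <- (exp_0), <- (Rplus_opp_l t).
       rewrite exp_plus. ring. }
  apply Rmult_le_compat_l; [left; apply exp_pos|auto].
Qed.

(* A power of [|z|] beats any power of the logarithm. *)
Lemma derivs_O_weaken U f (K k0 l l0 : nat) : in_punctured_unit_disc U ->
  ((k0 <= K)%nat /\ (l <= l0)%nat \/ (k0 < K)%nat) ->
  derivs_O U f (Z.of_nat K) l -> derivs_O U f (Z.of_nat k0) l0.
Proof.
  intros HU Hkl.
  assert (HW : exists D, 0 <= D /\ forall j z, U z ->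
    weight (Z.of_nat K) l j z <= D * weight (Z.of_nat k0) l0 j z).
  { destruct Hkl as [[Hk Hl]|Hk].
    - exists 1. split; [lra|]. intros j z Hz. pose proof (HU z Hz) as Hr.
      pose proof (logbound_ge1 z Hr). unfold weight. rewrite Rmult_1_l.
      apply Rmult_le_compat; [apply powerRZ_le; lra|apply pow_le; lra| |apply Rle_pow; auto].
      apply powerRZ_le_antimono; lia || lra.
    - destruct (Cmod_mul_logbound_pow_bounded l) as [D [HD HDb]]. exists D. split; auto.
      intros j z Hz. pose proof (HU z Hz) as Hr. specialize (HDb z Hr).
      pose proof (logbound_ge1 z Hr). unfold weight.
      set (P := powerRZ (Cmod z) (Z.of_nat k0 - Z.of_nat j)).
      assert (HP : 0 <= P) by (apply powerRZ_le; lra).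
      assert (E : powerRZ (Cmod z) (Z.of_nat K - Z.of_nat j) <= P * Cmod z).
      { unfold P. rewrite <- (powerRZ_1 (Cmod z)) at 3. rewrite <- powerRZ_add by lra.
        apply powerRZ_le_antimono; lia || lra. }
      assert (1 <= logbound z ^ l0) by (rewrite <- (pow1 l0); apply pow_incr; lra).
      assert (0 <= logbound z ^ l) by (apply pow_le; lra).
      apply Rle_trans with (P * (Cmod z * logbound z ^ l)).
      + rewrite <- Rmult_assoc. apply Rmult_le_compat_r; auto.
      + apply Rle_trans with (P * D); [apply Rmult_le_compat_l; auto|].
        assert (0 <= P * D) by (apply Rmult_le_pos; auto). nra. }
  intros HB j. destruct HW as [D [HD HW]], (HB j) as [c [Hc H]].
  exists (c * D). split; [nra|]. intros z Hz.
  eapply Rle_trans; [apply H; auto|]. rewrite Rmult_assoc. apply Rmult_le_compat_l; auto.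
Qed.

Lemma rsum_derivs_O U m (f : nat -> nat -> C -> C) k l : in_punctured_unit_disc U ->
  (forall i, (i < m)%nat -> derivs_O U (f i) k l) ->
  forall j, exists c, 0 <= c /\ forall z, U z -> rsum m (fun i => Cmod (f i j z)) <= c * weight k l j z.
Proof.
  intros HU H j. induction m; simpl.
  - exists 0. split; [lra|]. intros z Hz. pose proof (weight_ge0 k l j z (HU z Hz)). lra.
  - destruct IHm as [c1 [Hc1 H1]]; [intros; apply H; lia|].
    destruct (H m ltac:(lia) j) as [c2 [Hc2 H2]].
    exists (c1 + c2). split; [lra|]. intros z Hz. specialize (H1 z Hz). specialize (H2 z Hz). lra.
Qed.

Lemma weight_le_S k l j z : 0 < Cmod z < 1 -> weight k l j z <= weight k l (S j) z.
Proof.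
  intros Hr. unfold weight. apply Rmult_le_compat_r.
  - apply pow_le. pose proof (logbound_ge1 z Hr). lra.
  - apply powerRZ_le_antimono; lia || lra.
Qed.

Lemma rsum_weight_bound U (X : nat -> C -> R) k l : in_punctured_unit_disc U ->
  (forall j, exists c, 0 <= c /\ forall z, U z -> X j z <= c * weight k l j z) ->
  forall s, exists c, 0 <= c /\ forall z, U z -> rsum (S s) (fun j => X j z) <= c * weight k l s z.
Proof.
  intros HU H s. induction s.
  - destruct (H 0%nat) as [c [Hc H0]]. exists c. split; auto.
    intros z Hz. simpl. specialize (H0 z Hz). lra.
  - destruct IHs as [c1 [Hc1 H1]], (H (S s)) as [c2 [Hc2 H2]].
    exists (c1 + c2). split; [lra|]. intros z Hz.
    change (rsum (S (S s)) (fun j => X j z)) with (rsum (S s) (fun j => X j z) + X (S s) z).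
    specialize (H1 z Hz). specialize (H2 z Hz).
    pose proof (weight_le_S k l s z (HU z Hz)). pose proof (weight_ge0 k l s z (HU z Hz)).
    assert (c1 * weight k l s z <= c1 * weight k l (S s) z) by (apply Rmult_le_compat_l; auto).
    lra.
Qed.

(** * Convergence away from the puncture *)

Lemma eventually_forall_lt (X : nat) (P : nat -> nat -> Prop) :
  (forall x, (x < X)%nat -> eventually (P x)) ->
  eventually (fun K => forall x, (x < X)%nat -> P x K).
Proof.
  induction X; intros H.
  - apply filter_forall. intros; lia.
  - eapply filter_imp; [|apply filter_and; [apply IHX; intros; apply H; lia|apply (H X); lia]].
    intros K [H1 H2] x Hx. destruct (Nat.eq_dec x X) as [->|Hne]; auto. apply H1; lia.
Qed.

Lemma Cmod_Cderivs_mul_le f g j z B1 B2 :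
  (forall a, (a <= j)%nat -> Cmod (f a z) <= B1) -> (forall b, (b <= j)%nat -> Cmod (g b z) <= B2) ->
  0 <= B1 -> Cmod (Cderivs_mul f g j z) <= INR (length (leibniz_pairs j)) * (B1 * B2).
Proof.
  intros H1 H2 HB1. apply Cmod_Clist_sum_le. intros p Hp.
  pose proof (leibniz_pairs_sum j p Hp). rewrite Cmod_mult.
  apply Rmult_le_compat; try apply Cmod_ge_0; [apply H1|apply H2]; lia.
Qed.

Lemma log1z_pow_derivs_bounded_away U l j rho : in_punctured_unit_disc U -> 0 < rho ->
  exists B, 0 <= B /\ forall a z, (a <= j)%nat -> U z -> rho <= Cmod z ->
    Cmod (log1z_pow_derivs l a z) <= B.
Proof.
  intros HU Hrho.
  destruct (derivs_O_upto U _ 0 l HU (derivs_O_log1z_pow U l HU) j) as [c [Hc H]].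
  set (L := Rabs (ln (1 / rho)) + PI).
  assert (HL : 0 <= L)
    by (unfold L; pose proof (Rabs_pos (ln (1 / rho))); pose proof PI_RGT_0; lra).
  exists (c * (/ rho ^ j * L ^ l)). split.
  { apply Rmult_le_pos; auto. apply Rmult_le_pos; [left; apply Rinv_0_lt_compat, pow_lt; auto|].
    apply pow_le; auto. }
  intros a z Ha Hz Hr. eapply Rle_trans; [apply H; auto|].
  apply Rmult_le_compat_l; auto. unfold weight.
  pose proof (HU z Hz) as Hr1. pose proof (logbound_ge1 z Hr1).
  apply Rmult_le_compat; [apply powerRZ_le; lra|apply pow_le; lra| |apply pow_incr; split; [lra|]].
  - replace (0 - Z.of_nat a)%Z with (- Z.of_nat a)%Z by lia.
    rewrite powerRZ_neg', <- pow_powerRZ.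
    apply Rinv_le_contravar; [apply pow_lt; auto|].
    apply Rle_trans with (rho ^ a); [apply pow_le_pow_le1; lra || auto|apply pow_incr; lra].
  - unfold logbound, L. pose proof (Rle_abs (ln (1 / rho))).
    assert (ln (1 / Cmod z) <= ln (1 / rho)); [|lra].
    destruct (Req_dec (Cmod z) rho) as [->|Hne]; [lra|].
    left. apply ln_increasing; unfold Rdiv; rewrite !Rmult_1_l;
      [apply Rinv_0_lt_compat; lra|apply Rinv_lt_contravar; nra].
Qed.

(* Away from the puncture the log powers are bounded, so the tails of the
   power series control the whole product. *)
Lemma Cderivs_mul_log1z_pow_tail_small U r a l j eps rho eta :
  in_punctured_unit_disc U -> (forall z, U z -> Cmod z <= eps) -> radius_ge r a -> 0 < eps < r ->
  0 < rho -> 0 < eta ->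
  eventually (fun K => forall z, U z -> rho <= Cmod z ->
    Cmod (Cderivs_mul (log1z_pow_derivs l) (CPSeries_derivs (tail_coefs K a)) j z) <= eta).
Proof.
  intros HU HUe Ha He Hrho Heta.
  destruct (log1z_pow_derivs_bounded_away U l j rho HU Hrho) as [B [HB HBb]].
  set (len := INR (length (leibniz_pairs j))).
  assert (Hlen : 0 <= len) by apply pos_INR.
  set (eta' := eta / ((len + 1) * (B + 1))).
  assert (Heta' : 0 < eta')
    by (unfold eta'; apply Rdiv_lt_0_compat; [lra|apply Rmult_lt_0_compat; lra]).
  eapply filter_imp; [|apply (eventually_forall_lt (S j)); intros b Hb;
    apply (CPSeries_derivs_tail r a eps b Ha He eta' Heta')].
  intros K HK z Hz Hr.
  eapply Rle_trans; [apply Cmod_Cderivs_mul_le with (B1 := B) (B2 := eta'); auto|].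
  - intros b Hb. apply HK; [lia|auto].
  - fold len. unfold eta'.
    replace (len * (B * (eta / ((len + 1) * (B + 1)))))
      with (eta * (len / (len + 1)) * (B / (B + 1))) by (field; lra).
    assert (len / (len + 1) <= 1) by (apply Rle_div_l; lra).
    assert (B / (B + 1) <= 1) by (apply Rle_div_l; lra).
    assert (0 <= len / (len + 1)) by (apply Rle_mult_inv_pos; lra).
    assert (0 <= B / (B + 1)) by (apply Rle_mult_inv_pos; lra).
    assert (len / (len + 1) * (B / (B + 1)) <= 1)
      by (apply Rle_trans with (1 * 1); [apply Rmult_le_compat; auto|lra]).
    rewrite Rmult_assoc. pattern eta at 2. rewrite <- (Rmult_1_r eta).
    apply Rmult_le_compat_l; lra.
Qed.

(** * The expansion near the puncture *)

(* Below [exp (-PI)] we have [PI <= ln (1/|z|)], hence [logbound z <= 2 ln (1/|z|)]. *)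
Definition near_radius (delta : R) : R := Rmin (delta / 2) (exp (- PI)).

Lemma near_radius_bounds delta : 0 < delta -> 0 < near_radius delta < delta.
Proof.
  intros H. unfold near_radius. split; [apply Rmin_glb_lt; [lra|apply exp_pos]|].
  pose proof (Rmin_l (delta / 2) (exp (- PI))). lra.
Qed.

Lemma slitdisc_near_radius delta z : 0 < delta -> slitdisc (near_radius delta) z ->
  slit_plane z /\ 0 < Cmod z < 1 /\ Cmod z < delta /\ PI <= ln (1 / Cmod z).
Proof.
  intros Hd [[H1 H2] H3].
  pose proof (near_radius_bounds delta Hd).
  assert (Hexp : Cmod z < exp (- PI)) by (pose proof (Rmin_r (delta / 2) (exp (- PI))); unfold near_radius in H2; lra).
  assert (exp (- PI) < 1) by (rewrite <- exp_0; apply exp_increasing; pose proof PI_RGT_0; lra).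
  split; [exact H3|]. split; [lra|]. split; [lra|].
  rewrite <- (ln_exp PI). left. apply ln_increasing; [apply exp_pos|].
  unfold Rdiv. rewrite Rmult_1_l, <- (Rinv_inv (exp PI)), <- exp_Ropp.
  apply Rinv_lt_contravar; [apply Rmult_lt_0_compat; [lra|apply exp_pos]|lra].
Qed.

Lemma in_punctured_unit_disc_near_radius delta : 0 < delta -> in_punctured_unit_disc (slitdisc (near_radius delta)).
Proof. intros Hd z Hz. apply (slitdisc_near_radius delta z Hd Hz). Qed.

Lemma derivs_on_of_Cderivs_on m U (F : nat -> C -> Vec) :
  (forall i, (i < m)%nat -> Cderivs_on U (fun j z => F j z i)) -> derivs_on m U F.
Proof. intros H j i z Hz Hi. exact (H i Hi j z Hz). Qed.

(* The coefficients of [Omega - trunc]. *)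
Definition remainder_coefs (n : nat) (mu : R) (A : nat -> Vec) (l p k : nat) : C :=
  if Rle_dec (deg n (Z.of_nat k) (Z.of_nat l)) mu then 0%C else A k p.

Section Expansion.

Variables (m n : nat) (N : Mat) (A : nat -> Vec) (Aval : C -> Vec) (delta : R).
Hypothesis delta_pos : 0 < delta.
Hypothesis A_series : forall z i, Cmod z < delta -> (i < m)%nat ->
  is_Cseries (fun j => A j i * Cpow z j)%C (Aval z i).

Let U := slitdisc (near_radius delta).

Lemma radius_ge_A p : (p < m)%nat -> radius_ge delta (fun k => A k p).
Proof.
  intros Hp. apply (radius_ge_of_is_Cseries delta _ (fun z => Aval z p)).
  intros z Hz. apply A_series; auto.
Qed.

Lemma Cderivs_on_logPS_near b i : (forall l p, (p < m)%nat -> radius_ge delta (b l p)) ->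
  Cderivs_on U (fun j z => logPS_derivs m n N b j z i).
Proof.
  intros Hb. apply (Cderivs_on_logPS m n N b U delta i Hb).
  intros z Hz. destruct (slitdisc_near_radius delta z delta_pos Hz) as [? [? [? ?]]]. auto.
Qed.

Lemma Omega_minus_logPS_near (b : nat -> nat -> nat -> C) (sel : nat -> nat -> C) K z i :
  U z -> (forall l p, (p < m)%nat -> radius_ge delta (b l p)) ->
  (forall l p k, (l <= n)%nat -> (p < m)%nat -> (K <= k)%nat -> b l p k = A k p) ->
  (forall l p k, (l <= n)%nat -> (p < m)%nat -> (k < K)%nat ->
     (A k p - b l p k = sel l k * A k p)%C) ->
  (Omega m n N Aval z i - logPS_derivs m n N b 0 z i)%C =
  csum K (fun k => csum (S n) (fun l => sel l k * (Akl m N A k l i * fkl k l z)))%C.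
Proof.
  intros Hz Hb H1 H2. destruct (slitdisc_near_radius delta z delta_pos Hz) as [_ [_ [Hzd _]]].
  apply Omega_minus_logPS. intros l p Hl Hp.
  apply (Cseries_minus_CPSeries delta (fun k => A k p)); auto; intros k Hk.
  - symmetry. apply H1; auto; lia.
  - apply H2; auto; lia.
Qed.

Lemma logPS_A_0 z i : U z ->
  logPS_derivs m n N (fun l p k => A k p) 0 z i = Omega m n N Aval z i.
Proof.
  intros Hz. symmetry. apply Ceq_minus.
  rewrite (Omega_minus_logPS_near _ (fun _ _ => 0%C) 0 z i Hz); auto.
  - intros l p Hp. apply radius_ge_A; auto.
  - intros; lia.
Qed.

Lemma logPS_tail_0 K z i : U z ->
  (Omega m n N Aval z i - logPS_derivs m n N (fun l p => tail_coefs K (fun k => A k p)) 0 z i)%C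
  = psum m n N A K z i.
Proof.
  intros Hz. rewrite (Omega_minus_logPS_near _ (fun _ _ => 1%C) K z i Hz).
  - unfold psum. apply csum_ext; intros k Hk. apply csum_ext; intros l Hl. ring.
  - intros l p Hp. apply radius_ge_tail_coefs, radius_ge_A; auto.
  - intros l p k Hl Hp Hk. unfold tail_coefs. apply Nat.leb_le in Hk. now rewrite Hk.
  - intros l p k Hl Hp Hk. unfold tail_coefs. apply Nat.leb_gt in Hk. rewrite Hk. ring.
Qed.

Lemma logPS_tail_small j rho eta : 0 < rho -> 0 < eta ->
  eventually (fun K => forall z, U z -> rho <= Cmod z ->
    vnorm m (logPS_derivs m n N (fun l p => tail_coefs K (fun k => A k p)) j z) < eta).
Proof.
  intros Hrho Heta.
  set (c := fun i l p => Cmod (exp_coef l * matpow m N l i p)).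
  set (Cst := rsum m (fun i => rsum (S n) (fun l => rsum m (c i l)))).
  assert (HCst : 0 <= Cst)
    by (repeat (apply rsum_ge0; intros); apply Cmod_ge_0).
  set (eta' := eta / (Cst + 1)).
  assert (Heta' : 0 < eta') by (apply Rdiv_lt_0_compat; lra).
  pose proof (near_radius_bounds delta delta_pos) as Hnr.
  assert (HUe : forall z, U z -> Cmod z <= near_radius delta)
    by (intros z [[_ Hz] _]; lra).
  eapply filter_imp; [|apply (eventually_forall_lt (S n)); intros l Hl;
    apply (eventually_forall_lt m); intros p Hp;
    apply (Cderivs_mul_log1z_pow_tail_small U delta (fun k => A k p) l j (near_radius delta)
             rho eta' (in_punctured_unit_disc_near_radius delta delta_pos) HUe (radius_ge_A p Hp) Hnr
             Hrho Heta')].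
  intros K HK z Hz Hr.
  apply Rle_lt_trans with (Cst * eta').
  - unfold Cst. rewrite <- !rsum_mulr. apply rsum_le; intros i Hi.
    eapply Rle_trans; [apply Cmod_csum_le|]. rewrite <- rsum_mulr. apply rsum_le; intros l Hl.
    eapply Rle_trans; [apply Cmod_csum_le|]. rewrite <- rsum_mulr. apply rsum_le; intros p Hp.
    rewrite Cmod_mult. apply Rmult_le_compat_l; [apply Cmod_ge_0|]. apply HK; auto.
  - unfold eta'. replace (Cst * (eta / (Cst + 1))) with (eta * (Cst / (Cst + 1))) by (field; lra).
    assert (Cst / (Cst + 1) < 1) by (apply (Rdiv_lt_1 Cst (Cst + 1)); lra).
    rewrite <- (Rmult_1_r eta) at 2. apply Rmult_lt_compat_l; lra.
Qed.

Lemma radius_ge_remainder_coefs mu l p : (p < m)%nat ->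
  radius_ge delta (remainder_coefs n mu A l p).
Proof.
  intros Hp. apply (radius_ge_le delta (fun k => A k p)); [|apply radius_ge_A; auto].
  intros k. unfold remainder_coefs. destruct (Rle_dec _ _); [rewrite Cmod_0; apply Cmod_ge_0|lra].
Qed.

Lemma logPS_remainder_0 mu z i : U z ->
  logPS_derivs m n N (remainder_coefs n mu A) 0 z i =
  (Omega m n N Aval z i - trunc m n N A mu z i)%C.
Proof.
  intros Hz.
  set (sel := fun l k => if Rle_dec (deg n (Z.of_nat k) (Z.of_nat l)) mu then 1%C else 0%C).
  assert (E : (Omega m n N Aval z i - logPS_derivs m n N (remainder_coefs n mu A) 0 z i)%C
              = trunc m n N A mu z i).
  { rewrite (Omega_minus_logPS_near _ sel (S (Z.to_nat (up mu))) z i Hz).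
    - unfold trunc, sel. apply csum_ext; intros k Hk. apply csum_ext; intros l Hl.
      destruct (Rle_dec _ _); ring.
    - intros l p Hp. apply radius_ge_remainder_coefs; auto.
    - intros l p k Hl Hp Hk. unfold remainder_coefs.
      destruct (Rle_dec _ _) as [Hd|]; auto.
      pose proof (deg_gt_large n mu k l Hl ltac:(lia)). lra.
    - intros l p k Hl Hp Hk. unfold remainder_coefs, sel. destruct (Rle_dec _ _); ring. }
  rewrite <- E. ring.
Qed.

Lemma derivs_O_logPS_remainder mu k0 l0 i : (l0 <= n)%nat ->
  (forall k' l' : Z, deg n k' l' > mu -> deg n k' l' >= deg n (Z.of_nat k0) (Z.of_nat l0)) ->
  derivs_O U (fun j z => logPS_derivs m n N (remainder_coefs n mu A) j z i) (Z.of_nat k0) l0.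
Proof.
  intros Hl0 Hmin. pose proof (in_punctured_unit_disc_near_radius delta delta_pos) as HU.
  pose proof (near_radius_bounds delta delta_pos) as Hnr.
  apply derivs_O_csum; auto. intros l Hl. apply derivs_O_csum; auto. intros p Hp.
  apply derivs_O_scal.
  set (K := if Nat.leb l l0 then k0 else S k0).
  apply (derivs_O_weaken U _ K k0 l l0 HU).
  { unfold K. destruct (Nat.leb l l0) eqn:E; [apply Nat.leb_le in E|]; lia. }
  assert (H : derivs_O U (Cderivs_mul (log1z_pow_derivs l)
    (CPSeries_derivs (remainder_coefs n mu A l p))) (0 + Z.of_nat K) (l + 0)).
  { apply (derivs_O_mul U _ _ 0 l (Z.of_nat K) 0 HU (derivs_O_log1z_pow U l HU)).
    apply (derivs_O_CPSeries U delta _ K (near_radius delta)); auto.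
    - apply radius_ge_remainder_coefs; auto.
    - intros k Hk. unfold remainder_coefs.
      destruct (Rle_dec _ _) as [|Hd]; auto. exfalso. apply Hd.
      apply (deg_le_below n mu k0 l0); auto.
    - intros z [[_ Hz] _]. lra. }
  rewrite Nat.add_0_r in H. exact H.
Qed.

Lemma Omega_series_Cinfty :
  exists eps : R, 0 < eps /\
  exists (F : nat -> C -> Vec) (G : nat -> nat -> C -> Vec),
    (forall z i, slitdisc eps z -> (i < m)%nat -> F O z i = Omega m n N Aval z i) /\
    derivs_on m (slitdisc eps) F /\
    (forall K z i, slitdisc eps z -> (i < m)%nat -> G K O z i = psum m n N A K z i) /\
    (forall K, derivs_on m (slitdisc eps) (G K)) /\
    (forall (j : nat) (rho rho' eta : R), 0 < rho -> rho' < eps -> 0 < eta ->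
       exists K0 : nat, forall K z, (K0 <= K)%nat -> slitdisc eps z ->
         rho <= Cmod z <= rho' -> vnorm m (vsub (G K j z) (F j z)) < eta).
Proof.
  pose proof (near_radius_bounds delta delta_pos) as Hnr.
  set (F := logPS_derivs m n N (fun l p k => A k p)).
  set (T := fun K => logPS_derivs m n N (fun l p => tail_coefs K (fun k => A k p))).
  assert (HF : forall i, (i < m)%nat -> Cderivs_on U (fun j z => F j z i)).
  { intros i _. apply Cderivs_on_logPS_near. intros l p Hp. apply radius_ge_A; auto. }
  assert (HT : forall K i, (i < m)%nat -> Cderivs_on U (fun j z => T K j z i)).
  { intros K i _. apply Cderivs_on_logPS_near. intros l p Hp.
    apply radius_ge_tail_coefs, radius_ge_A; auto. }
  exists (near_radius delta). split; [lra|].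
  exists F, (fun K j z i => F j z i - T K j z i)%C.
  split; [|split; [|split; [|split]]].
  - intros z i Hz _. apply logPS_A_0; auto.
  - apply derivs_on_of_Cderivs_on. exact HF.
  - intros K z i Hz _. unfold F. rewrite logPS_A_0 by auto. apply logPS_tail_0; auto.
  - intros K. apply derivs_on_of_Cderivs_on. intros i Hi. apply Cderivs_on_minus; auto.
  - intros j rho rho' eta Hrho _ Heta.
    destruct (logPS_tail_small j rho eta Hrho Heta) as [K0 HK0].
    exists K0. intros K z HK Hz [Hr _].
    eapply Rle_lt_trans; [|apply (HK0 K HK z Hz Hr)].
    unfold vnorm, vsub. apply Req_le, rsum_ext. intros i _.
    rewrite <- Cmod_opp. f_equal. fold (T K). ring.
Qed.

Lemma Omega_remainder_estimate (mu : R) (s k0 l0 : nat) : (l0 <= n)%nat ->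
  (forall k' l' : Z, deg n k' l' > mu -> deg n k' l' >= deg n (Z.of_nat k0) (Z.of_nat l0)) ->
  exists (Cc eps : R), 0 < eps /\
  exists F : nat -> C -> Vec,
    (forall z i, slitdisc eps z -> (i < m)%nat ->
       F O z i = (Omega m n N Aval z i - trunc m n N A mu z i)%C) /\
    derivs_on m (slitdisc eps) F /\
    (forall z, slitdisc eps z ->
       Csnorm m F s z <= Cc * powerRZ (Cmod z) (Z.of_nat k0 - Z.of_nat s) * (ln (1 / Cmod z)) ^ l0).
Proof.
  intros Hl0 Hmin.
  pose proof (near_radius_bounds delta delta_pos) as Hnr.
  pose proof (in_punctured_unit_disc_near_radius delta delta_pos) as HU.
  set (F := logPS_derivs m n N (remainder_coefs n mu A)).
  destruct (rsum_weight_bound U (fun j z => vnorm m (F j z)) (Z.of_nat k0) l0 HU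
    (rsum_derivs_O U m (fun i j z => F j z i) _ _ HU
      (fun i _ => derivs_O_logPS_remainder mu k0 l0 i Hl0 Hmin)) s) as [c [Hc Hbound]].
  exists (c * 2 ^ l0), (near_radius delta). split; [lra|].
  exists F. split; [|split].
  - intros z i Hz _. apply logPS_remainder_0; auto.
  - apply derivs_on_of_Cderivs_on. intros i _. apply Cderivs_on_logPS_near.
    intros l p Hp. apply radius_ge_remainder_coefs; auto.
  - intros z Hz. destruct (slitdisc_near_radius delta z delta_pos Hz) as [_ [Hr [_ Hln]]].
    eapply Rle_trans; [apply Hbound; auto|]. unfold weight.
    rewrite !Rmult_assoc. apply Rmult_le_compat_l; auto.
    rewrite (Rmult_comm (2 ^ l0)), Rmult_assoc.
    apply Rmult_le_compat_l; [apply powerRZ_le; lra|].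
    rewrite <- Rpow_mult_distr. apply pow_incr. unfold logbound. pose proof PI_RGT_0. lra.
Qed.

End Expansion.

Theorem lemma7p2 (m n : nat) (N : Mat) (A : nat -> Vec)
  (Aval : Complex.C -> Vec) (delta : R) :
  0 < delta ->
  (* N is nilpotent, N^(n+1) = 0 *)
  (forall i j : nat, (i < m)%nat -> (j < m)%nat -> matpow m N (S n) i j = RtoC 0) ->
  (* A(z) = A_0 + A_1 z + ... converges to Aval z for |z| < delta *)
  (forall (z : Complex.C) (i : nat), Cmod z < delta -> (i < m)%nat ->
     @is_series C_AbsRing C_NormedModule
       (fun j => Cmult (A j i) (Cpow z j)) (Aval z i)) ->
  (* (1) the series sum_{k,l} A_{k,l} f_{k,l} converges to Omega in the C^oo sense near 0 *)
  (exists eps : R, 0 < eps /\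
   exists (F : nat -> Complex.C -> Vec) (G : nat -> nat -> Complex.C -> Vec),
     (forall z i, slitdisc eps z -> (i < m)%nat -> F O z i = Omega m n N Aval z i) /\
     derivs_on m (slitdisc eps) F /\
     (forall K z i, slitdisc eps z -> (i < m)%nat -> G K O z i = psum m n N A K z i) /\
     (forall K, derivs_on m (slitdisc eps) (G K)) /\
     (forall (j : nat) (rho rho' eta : R), 0 < rho -> rho' < eps -> 0 < eta ->
        exists K0 : nat, forall K z, (K0 <= K)%nat -> slitdisc eps z ->
          rho <= Cmod z <= rho' ->
          vnorm m (vsub (G K j z) (F j z)) < eta)) /\
  (* (2) the remainder estimate *)
  (forall (mu : R) (s k0 l0 : nat),
     (l0 <= n)%nat ->
     deg n (Z.of_nat k0) (Z.of_nat l0) > mu ->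
     (forall k' l' : Z, deg n k' l' > mu ->
        deg n k' l' >= deg n (Z.of_nat k0) (Z.of_nat l0)) ->
     exists (Cc eps : R), 0 < eps /\
     exists F : nat -> Complex.C -> Vec,
       (forall z i, slitdisc eps z -> (i < m)%nat ->
          F O z i = Cminus (Omega m n N Aval z i) (trunc m n N A mu z i)) /\
       derivs_on m (slitdisc eps) F /\
       (forall z, slitdisc eps z ->
          Csnorm m F s z <=
          Cc * powerRZ (Cmod z) (Z.of_nat k0 - Z.of_nat s) * (ln (1 / Cmod z)) ^ l0)).
Proof.
  (* Nilpotency is already built into [Omega], a finite sum over [l <= n], and the
     estimate only needs the minimality of [deg (k0, l0)], not [deg (k0, l0) > mu]. *)
  intros Hdelta _ HA. split.
  - exact (Omega_series_Cinfty m n N A Aval delta Hdelta HA).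
  - intros mu s k0 l0 Hl0 _ Hmin.
    exact (Omega_remainder_estimate m n N A Aval delta Hdelta HA mu s k0 l0 Hl0 Hmin).
Qed.
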